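(* Let $\theta\in M_{k,d}([0,\infty))$ with rows $\theta_1,\dots,\theta_k$, let $\beta\in(0,\infty)$ and $r\in(0,\infty)^k$. Call a finite positive measure $\nu$ on $\mathbb{S}^d$ subinvariant if \[ \prod_{j=1}^k\big(\operatorname{id}-e^{-\beta s_jr_j}R_{s_j\theta_j^T*}\big)(\nu)\ge0\quad\text{for all }s\in[0,\infty)^k. \] (a) For each finite positive measure $\mu$ on $\mathbb{S}^d$ there is a finite positive measure $\nu_\mu$ on $\mathbb{S}^d$ with \[ \int_{\mathbb{S}^d}f\,d\nu_\mu=\int_{[0,\infty)^k}e^{-\beta w^Tr}\int_{\mathbb{S}^d}f(x+\theta^Tw)\,d\mu(x)\,dw\quad(f\in C(\mathbb{S}^d)), \] $\nu_\mu$ has total mass $\|\mu\|\prod_{j=1}^k(\beta r_j)^{-1}$, and $\nu_\mu$ is subinvariant. (b) For each subinvariant $\nu$ there is a finite positive measure $\mu_\nu$ on $\mathbb{S}^d$ with \[ \int_{\mathbb{S}^d}f\,d\mu_\nu=\lim_{s_k\to0^+}\cdots\lim_{s_1\to0^+}\frac{1}{s_k\cdots s_1}\int_{\mathbb{S}^d}f\,d\Big(\prod_{j=1}^k\big(\operatorname{id}-e^{-\beta s_jr_j}R_{s_j\theta_j^T*}\big)(\nu)\Big)\quad(f\in C(\mathbb{S}^d)), \] where the iterated limits exist, and $\mu_\nu$ has total mass $\|\nu\|\prod_{j=1}^k(\beta r_j)$. (c) The map $\mu\mapsto\nu_\mu$ is an affine homeomorphism of the cone $M(\mathbb{S}^d)$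 of finite positive measures onto the set of subinvariant measures, with inverse $\nu\mapsto\mu_\nu$.
   Context: $\mathbb{S}^d=\mathbb{R}^d/\mathbb{Z}^d$; functions on $\mathbb{S}^d$ are viewed as $\mathbb{Z}^d$-periodic functions on $\mathbb{R}^d$. Vectors are columns and $A^T$ denotes transpose. For $y\in\mathbb{R}^d$, $R_y(x)=x+y$, and $R_{y*}$ is the pushforward on measures: $\int f\,dR_{y*}\mu=\int f\circ R_y\,d\mu$. A signed measure is ''$\ge0$'' if it is a positive measure. $\|\mu\|$ is total mass. Measures carry the weak* topology as functionals on $C(\mathbb{S}^d)$. *)

(* Finite positive measures on the torus
   S^d = R^d/Z^d are represented, via the Riesz representation theorem, as
   positive linear functionals on C(S^d) (Z^d-periodic continuous functions). *)
From Stdlib Require Import Reals List.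
Open Scope R_scope.

(* Points of R^d: only the coordinates 0..d-1 are relevant. *)
Definition vec := nat -> R.

Definition vadd (x y : vec) : vec := fun i => x i + y i.
Definition upd (x : vec) (n : nat) (t : R) : vec :=
  fun i => if Nat.eqb i n then t else x i.

Fixpoint sumR (n : nat) (g : nat -> R) : R :=
  match n with O => 0 | S m => sumR m g + g m end.
Fixpoint prodR (n : nat) (g : nat -> R) : R :=
  match n with O => 1 | S m => prodR m g * g m end.

Definition Cper (d : nat) (f : vec -> R) : Prop :=
  (forall x y : vec, (forall i, (i < d)%nat -> x i = y i) -> f x = f y) /\
  (forall (x : vec) (i : nat), (i < d)%nat -> f (upd x i (x i + 1)) = f x) /\
  (forall (x : vec) (eps : R), 0 < eps -> exists delta, 0 < delta /\
     forall y : vec, (forall i, (i < d)%nat -> Rabs (y i - x i) < delta) ->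
       Rabs (f y - f x) < eps).

Definition meas := (vec -> R) -> R.

Definition IsMeasure (d : nat) (m : meas) : Prop :=
  (forall f g, Cper d f -> Cper d g -> m (fun x => f x + g x) = m f + m g) /\
  (forall a f, Cper d f -> m (fun x => a * f x) = a * m f) /\
  (forall f, Cper d f -> (forall x, 0 <= f x) -> 0 <= m f).

Definition PosFun (d : nat) (m : meas) : Prop :=
  forall f, Cper d f -> (forall x, 0 <= f x) -> 0 <= m f.

Definition mass (m : meas) : R := m (fun _ => 1).

Definition pushR (y : vec) (m : meas) : meas := fun f => m (fun x => f (vadd x y)).

(* theta : k x d matrix, entry theta j i (row j, column i);
   s_j theta_j^T is the vector (s_j theta j i)_i *)
Definition rowvec (theta : nat -> nat -> R) (j : nat) (t : R) : vec :=
  fun i => t * theta j i.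

Definition thetaT (k : nat) (theta : nat -> nat -> R) (w : vec) : vec :=
  fun i => sumR k (fun j => theta j i * w j).

Definition Dop (theta : nat -> nat -> R) (beta : R) (r : nat -> R)
  (j : nat) (s : vec) (m : meas) : meas :=
  fun f => m f - exp (- (beta * s j * r j)) * pushR (rowvec theta j (s j)) m f.

Definition Pop (k : nat) (theta : nat -> nat -> R) (beta : R) (r : nat -> R)
  (s : vec) (nu : meas) : meas :=
  fold_right (fun j m => Dop theta beta r j s m) nu (seq 0 k).

Definition Subinvariant (d k : nat) (theta : nat -> nat -> R) (beta : R)
  (r : nat -> R) (nu : meas) : Prop :=
  IsMeasure d nu /\
  forall s : vec, (forall j, (j < k)%nat -> 0 <= s j) ->
    PosFun d (Pop k theta beta r s nu).

Definition ImproperInt (h : R -> R) (L : R) : Prop :=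
  (forall T, 0 <= T -> exists _ : Riemann_integrable h 0 T, True) /\
  (forall eps, 0 < eps -> exists M, forall T (pr : Riemann_integrable h 0 T),
      M <= T -> Rabs (RiemannInt pr - L) < eps).

(* iterated integral over [0,oo)^(coordinates in l), head coordinate innermost *)
Fixpoint IterInt (l : list nat) (g : vec -> R) (L : R) : Prop :=
  match l with
  | nil => forall w, g w = L
  | j :: l' => exists G : vec -> R,
      (forall w, ImproperInt (fun t => g (upd w j t)) (G w)) /\ IterInt l' G L
  end.

Definition LimRight0 (h : R -> R) (L : R) : Prop :=
  forall eps, 0 < eps -> exists delta, 0 < delta /\
    forall t, 0 < t < delta -> Rabs (h t - L) < eps.

(* iterated limits s_j -> 0+ over the coordinates in l, head innermost;
   outer (remaining) variables are kept strictly positive *)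
Fixpoint IterLim (l : list nat) (F : vec -> R) (L : R) : Prop :=
  match l with
  | nil => forall s, F s = L
  | j :: l' => exists G : vec -> R,
      (forall s, (forall i, In i l' -> 0 < s i) ->
         LimRight0 (fun t => F (upd s j t)) (G s)) /\ IterLim l' G L
  end.

Definition WeakStarCont (d : nat) (A : meas -> Prop) (Phi : meas -> meas) : Prop :=
  forall m0, A m0 -> forall f, Cper d f -> forall eps, 0 < eps ->
    exists (gs : list (vec -> R)) (delta : R), 0 < delta /\
      (forall g, In g gs -> Cper d g) /\
      forall m, A m -> (forall g, In g gs -> Rabs (m g - m0 g) < delta) ->
        Rabs (Phi m f - Phi m0 f) < eps.

Definition MeasEq (d : nat) (m1 m2 : meas) : Prop :=
  forall f, Cper d f -> m1 f = m2 f.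

(* For one direction j, the resolvent
     A_j m = int_0^oo e^{-beta r_j t} R_{t theta_j *} m dt
   and the generator
     G_j nu = lim_{t -> 0+} t^{-1} (id - e^{-beta r_j t} R_{t theta_j *}) nu
   are inverse bijections between finite positive measures and the measures nu with
   (id - e^{-beta r_j t} R_{t theta_j *}) nu >= 0 for all t >= 0.  The difference operator maps
   A_j m to the part of the integral on [0, t], whose average tends to m by uniform continuity of
   translations; conversely, u |-> e^{-beta r_j u} nu(f(. + u theta_j)) + int_0^u (G_j nu)(...)
   has right derivative 0, hence is constant.  The limit defining G_j nu exists because it exists
   in closed form at the averages of f along theta_j, which approximate f uniformly, while the
   difference quotients have mass at most beta r_j |nu|.  Operators in different directions
   commute, so nu_mu = A_1 ... A_k mu and mu_nu = G_k ... G_1 nu; subinvariance in one direction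
   follows from subinvariance of the products by sending the other s_i to +oo.  Weak* continuity
   follows from the same uniform estimates together with exponential tails. *)

From Stdlib Require Import Reals List.
From Stdlib Require Import Lra Lia FunctionalExtensionality ClassicalEpsilon Classical ZArith.
From Coquelicot Require Import Coquelicot.
Open Scope R_scope.

(** * Translations, periodic functions and positive functionals *)

Definition transl (v : vec) (f : vec -> R) : vec -> R := fun x => f (vadd x v).

Lemma vadd_assoc x a b : vadd (vadd x a) b = vadd x (vadd a b).
Proof. apply functional_extensionality; intro i; unfold vadd; ring. Qed.

Lemma vadd_comm a b : vadd a b = vadd b a.
Proof. apply functional_extensionality; intro i; unfold vadd; ring. Qed.

Lemma vadd_AC x a b : vadd (vadd x a) b = vadd (vadd x b) a.
Proof. apply functional_extensionality; intro i; unfold vadd; ring. Qed.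

Lemma vadd_rowvec0 theta j w : vadd (rowvec theta j 0) w = w.
Proof. apply functional_extensionality; intro i; unfold vadd, rowvec; ring. Qed.

Lemma rowvec_add theta j a b :
  vadd (rowvec theta j a) (rowvec theta j b) = rowvec theta j (a + b).
Proof. apply functional_extensionality; intro i; unfold vadd, rowvec; ring. Qed.

Lemma transl_transl a b f : transl a (transl b f) = transl (vadd a b) f.
Proof. unfold transl. apply functional_extensionality; intro x. now rewrite vadd_assoc. Qed.

Lemma transl_comm a b f : transl a (transl b f) = transl b (transl a f).
Proof. now rewrite !transl_transl, vadd_comm. Qed.

Lemma transl0 f : transl (fun _ => 0) f = f.
Proof.
  apply functional_extensionality; intro x. unfold transl. f_equal.
  apply functional_extensionality; intro; unfold vadd; ring.
Qed.

Lemma transl_rowvec0 theta j f : transl (rowvec theta j 0) f = f.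
Proof.
  unfold transl. apply functional_extensionality; intro x.
  now rewrite vadd_comm, vadd_rowvec0.
Qed.

Lemma upd_upd x i a b : upd (upd x i a) i b = upd x i b.
Proof. apply functional_extensionality; intro n; unfold upd. now destruct (Nat.eqb n i). Qed.

Lemma upd_eq x i a : upd x i a i = a.
Proof. unfold upd. now rewrite Nat.eqb_refl. Qed.

Lemma upd_neq x i a n : n <> i -> upd x i a n = x n.
Proof. intro H. unfold upd. destruct (Nat.eqb_spec n i); auto. contradiction. Qed.

Lemma vadd_upd x v i : vadd (upd x i (x i + 1)) v = upd (vadd x v) i (vadd x v i + 1).
Proof.
  apply functional_extensionality; intro n; unfold vadd, upd.
  destruct (Nat.eqb_spec n i); subst; ring.
Qed.

Lemma INR_unbounded M : exists N, forall n, (N <= n)%nat -> M <= INR n.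
Proof.
  destruct (INR_archimed 1 M ltac:(lra)) as [N HN]. exists N. intros n Hn.
  apply le_INR in Hn. lra.
Qed.

Lemma inv_INR_succ_small eps : 0 < eps ->
  exists N, forall n, (N <= n)%nat -> / (INR n + 1) < eps.
Proof.
  intros He. destruct (INR_unbounded (/ eps)) as [N HN]. exists N. intros n Hn.
  rewrite <- (Rinv_inv eps). apply Rinv_lt_contravar.
  - apply Rmult_lt_0_compat. now apply Rinv_0_lt_compat. pose proof (pos_INR n); lra.
  - specialize (HN n Hn). lra.
Qed.

Lemma Rabs_lincomb_lt a b u v eps : 0 < eps ->
  Rabs u <= eps / (2 * (Rabs a + Rabs b + 1)) -> Rabs v <= eps / (2 * (Rabs a + Rabs b + 1)) ->
  Rabs (a * u + b * v) < eps.
Proof.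
  intros He Hu Hv. pose proof (Rabs_pos a); pose proof (Rabs_pos b).
  set (e := eps / (2 * (Rabs a + Rabs b + 1))) in *.
  assert (Ee : e * (2 * (Rabs a + Rabs b + 1)) = eps) by (unfold e; field; lra).
  eapply Rle_lt_trans. apply Rabs_triang. rewrite !Rabs_mult.
  assert (Rabs a * Rabs u <= Rabs a * e) by (apply Rmult_le_compat_l; lra).
  assert (Rabs b * Rabs v <= Rabs b * e) by (apply Rmult_le_compat_l; lra).
  assert (0 < e) by (unfold e; apply Rdiv_lt_0_compat; lra).
  nra.
Qed.

Section PeriodicFunctions.
Variable d : nat.

Lemma Cper_ext f g : (forall x, f x = g x) -> Cper d f -> Cper d g.
Proof. intros H Hf. replace g with f; auto. now apply functional_extensionality. Qed.

Lemma Cper_transl v f : Cper d f -> Cper d (transl v f).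
Proof.
  intros [H1 [H2 H3]]. unfold transl. split; [|split].
  - intros x y Hxy. apply H1. intros i Hi. unfold vadd. now rewrite Hxy.
  - intros x i Hi. rewrite vadd_upd. now apply H2.
  - intros x eps He. destruct (H3 (vadd x v) eps He) as [dl [Hd Hdl]].
    exists dl; split; auto. intros y Hy. apply Hdl. intros i Hi.
    unfold vadd. replace (y i + v i - (x i + v i)) with (y i - x i) by ring. auto.
Qed.

Lemma Cper_const c : Cper d (fun _ => c).
Proof.
  split; [|split]; auto.
  intros x eps He; exists 1; split; [lra|]. intros; rewrite Rminus_diag, Rabs_R0; auto.
Qed.

Lemma Cper_lin a b f g : Cper d f -> Cper d g -> Cper d (fun x => a * f x + b * g x).
Proof.
  intros [F1 [F2 F3]] [G1 [G2 G3]]. split; [|split].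
  - intros x y H. now rewrite (F1 x y H), (G1 x y H).
  - intros x i Hi. now rewrite F2, G2.
  - intros x eps He.
    set (e := eps / (2 * (Rabs a + Rabs b + 1))).
    assert (Hc : 0 < e).
    { apply Rdiv_lt_0_compat; auto. pose proof (Rabs_pos a); pose proof (Rabs_pos b); lra. }
    destruct (F3 x _ Hc) as [d1 [Hd1 P1]]. destruct (G3 x _ Hc) as [d2 [Hd2 P2]].
    exists (Rmin d1 d2); split. { now apply Rmin_pos. }
    intros y Hy.
    replace (a * f y + b * g y - (a * f x + b * g x)) with
      (a * (f y - f x) + b * (g y - g x)) by ring.
    apply Rabs_lincomb_lt; auto; left.
    + apply P1. intros i Hi. specialize (Hy i Hi). pose proof (Rmin_l d1 d2). lra.
    + apply P2. intros i Hi. specialize (Hy i Hi). pose proof (Rmin_r d1 d2). lra.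
Qed.

Lemma Cper_scal a f : Cper d f -> Cper d (fun x => a * f x).
Proof. intros. eapply Cper_ext; [|apply (Cper_lin a 0 f f); auto]. intros; simpl; ring. Qed.

Lemma Cper_minus f g : Cper d f -> Cper d g -> Cper d (fun x => f x - g x).
Proof. intros. eapply Cper_ext; [|apply (Cper_lin 1 (-1) f g); auto]. intros; simpl; ring. Qed.

Lemma Cper_shift_nat f x i (n : nat) : Cper d f -> (i < d)%nat ->
  f (upd x i (x i + INR n)) = f x.
Proof.
  intros Hf Hi. induction n.
  - simpl. replace (upd x i (x i + 0)) with x; auto.
    apply functional_extensionality; intro m; unfold upd. destruct (Nat.eqb_spec m i); subst; ring.
  - destruct Hf as [_ [H2 _]].
    rewrite S_INR. replace (upd x i (x i + (INR n + 1))) with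
      (upd (upd x i (x i + INR n)) i (upd x i (x i + INR n) i + 1)).
    + rewrite H2; auto.
    + rewrite upd_eq, upd_upd. f_equal. ring.
Qed.

Lemma Cper_shift_Z f x i (n : Z) : Cper d f -> (i < d)%nat ->
  f (upd x i (x i + IZR n)) = f x.
Proof.
  intros Hf Hi. destruct (Z_le_dec 0 n).
  - rewrite <- (Z2Nat.id n l), <- INR_IZR_INZ. now apply Cper_shift_nat.
  - set (y := upd x i (x i + IZR n)).
    assert (Ex : x = upd y i (y i + INR (Z.to_nat (- n)))).
    { unfold y. rewrite upd_eq, upd_upd. rewrite INR_IZR_INZ, Z2Nat.id by lia. rewrite opp_IZR.
      apply functional_extensionality; intro m; unfold upd. destruct (Nat.eqb_spec m i); subst; ring. }
    transitivity (f (upd y i (y i + INR (Z.to_nat (- n))))).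
    + symmetry. now apply Cper_shift_nat.
    + now rewrite <- Ex.
Qed.

Lemma Cper_congr_int f x y : Cper d f ->
  (forall i, (i < d)%nat -> exists n : Z, y i = x i + IZR n) -> f y = f x.
Proof.
  intros Hf H.
  set (z := fun (m : nat) (i : nat) => if Nat.ltb i m then y i else x i).
  assert (Hz : forall m, (m <= d)%nat -> f (z m) = f x).
  { induction m; intros Hm.
    - reflexivity.
    - destruct (H m ltac:(lia)) as [n Hn].
      replace (z (S m)) with (upd (z m) m (z m m + IZR n)).
      + rewrite Cper_shift_Z; auto; try lia. apply IHm; lia.
      + apply functional_extensionality; intro i. unfold z, upd.
        destruct (Nat.eqb_spec i m).
        * subst. rewrite Nat.ltb_irrefl. replace (Nat.ltb m (S m)) with true
            by (symmetry; apply Nat.ltb_lt; lia). lra.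
        * destruct (Nat.ltb_spec i m); destruct (Nat.ltb_spec i (S m)); auto; lia. }
  rewrite <- (Hz d (le_n d)). destruct Hf as [H1 _]. apply H1.
  intros i Hi. unfold z. destruct (Nat.ltb_spec i d); auto; lia.
Qed.

End PeriodicFunctions.

Definition strict_incr (phi : nat -> nat) := forall n, (phi n < phi (S n))%nat.

Lemma strict_incr_ge phi : strict_incr phi -> forall n, (n <= phi n)%nat.
Proof. intros H n; induction n; [lia|]. specialize (H n). lia. Qed.

Lemma strict_incr_lt phi : strict_incr phi -> forall a b, (a < b)%nat -> (phi a < phi b)%nat.
Proof.
  intros H a b Hab. induction b; [lia|].
  destruct (Nat.eq_dec a b); subst. apply H. specialize (H b). specialize (IHb ltac:(lia)). lia.
Qed.

Lemma strict_incr_comp phi psi :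
  strict_incr phi -> strict_incr psi -> strict_incr (fun n => phi (psi n)).
Proof. intros H1 H2 n. apply strict_incr_lt; auto. Qed.

Lemma Un_cv_subseq u l psi : strict_incr psi -> Un_cv u l -> Un_cv (fun n => u (psi n)) l.
Proof.
  intros Hp H eps He. destruct (H eps He) as [N HN]. exists N. intros n Hn.
  apply HN. pose proof (strict_incr_ge psi Hp n). lia.
Qed.

(* [g (N, n)] is an index beyond [N] whose term is [1/(n+1)]-close to the cluster point. *)
Fixpoint cluster_subseq (g : nat * nat -> nat) (n : nat) : nat :=
  match n with O => g (O, O) | S m => g (S (cluster_subseq g m), S m) end.

Lemma unit_interval_subseq_cv (a : nat -> R) : (forall n, 0 <= a n <= 1) ->
  exists phi l, strict_incr phi /\ Un_cv (fun n => a (phi n)) l.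
Proof.
  intros Ha. destruct (Bolzano_Weierstrass a _ (compact_P3 0 1) Ha) as [l Hl].
  assert (H : forall p : nat * nat,
    exists q, (fst p <= q)%nat /\ Rabs (a q - l) < / (INR (snd p) + 1)).
  { intros [N n]. simpl.
    assert (Hp : 0 < / (INR n + 1)) by (apply Rinv_0_lt_compat; pose proof (pos_INR n); lra).
    destruct (Hl (disc l (mkposreal _ Hp)) N) as [q [Hq1 Hq2]].
    - exists (mkposreal _ Hp). intros y Hy; auto.
    - exists q; split; auto. }
  destruct (choice _ H) as [g Hg].
  exists (cluster_subseq g), l. split.
  - intro n. simpl. destruct (Hg (S (cluster_subseq g n), S n)) as [H1 _]. simpl in H1. lia.
  - intros eps He. destruct (inv_INR_succ_small eps He) as [N HN]. exists N. intros n Hn.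
    unfold Rdist. eapply Rlt_trans; [|apply (HN n); lia].
    destruct n; simpl; [apply (Hg (0,0)%nat) | apply (Hg (S (cluster_subseq g n), S n))].
Qed.

Lemma unit_cube_subseq_cv (m : nat) (u : nat -> vec) :
  (forall n i, (i < m)%nat -> 0 <= u n i <= 1) ->
  exists phi z, strict_incr phi /\ forall i, (i < m)%nat -> Un_cv (fun n => u (phi n) i) (z i).
Proof.
  induction m; intros Hu.
  - exists (fun n => n), (fun _ => 0). split. intro n; lia. intros; lia.
  - destruct IHm as [phi [z [Hphi Hz]]]. { intros; apply Hu; lia. }
    destruct (unit_interval_subseq_cv (fun n => u (phi n) m)) as [psi [l [Hpsi Hl]]].
    { intros; apply Hu; lia. }
    exists (fun n => phi (psi n)), (fun i => if Nat.eqb i m then l else z i). split.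
    + now apply strict_incr_comp.
    + intros i Hi. destruct (Nat.eqb_spec i m). { subst. auto. }
      apply (Un_cv_subseq (fun n => u (phi n) i)); auto. apply Hz. lia.
Qed.

Definition vfrac (x : vec) : vec := fun i => x i - IZR (Int_part (x i)).

Lemma vfrac_bounds x i : 0 <= vfrac x i <= 1.
Proof. unfold vfrac. destruct (base_Int_part (x i)). lra. Qed.

Lemma Cper_vfrac d f x : Cper d f -> f (vfrac x) = f x.
Proof.
  intros Hf. apply (Cper_congr_int d); auto. intros i Hi.
  exists (- Int_part (x i))%Z. rewrite opp_IZR. unfold vfrac; ring.
Qed.

Lemma torus_subseq_close d (u : nat -> vec) : exists phi z, strict_incr phi /\
  forall delta, 0 < delta -> exists N, forall n, (N <= n)%nat ->
    forall i, (i < d)%nat -> Rabs (vfrac (u (phi n)) i - z i) < delta.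
Proof.
  destruct (unit_cube_subseq_cv d (fun n => vfrac (u n))) as [phi [z [Hphi Hz]]].
  { intros; apply vfrac_bounds. }
  exists phi, z. split; auto. intros delta Hd. clear Hphi.
  induction d as [|d IH]. { exists O. intros; lia. }
  destruct IH as [N1 H1]. { intros; apply Hz; lia. }
  destruct (Hz d ltac:(lia) delta Hd) as [N2 H2]. exists (Nat.max N1 N2). intros n Hn i Hi.
  destruct (Nat.eq_dec i d). { subst; apply H2; lia. } apply H1; lia.
Qed.

Lemma Cper_unif_cont d f : Cper d f -> forall eps, 0 < eps -> exists delta, 0 < delta /\
  forall x y : vec, (forall i, (i < d)%nat -> Rabs (y i - x i) < delta) ->
  Rabs (f y - f x) < eps.
Proof.
  intros Hf eps He. apply NNPP. intro Hn.
  assert (Hs : forall n : nat, exists p : vec * vec,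
    (forall i, (i < d)%nat -> Rabs (snd p i - fst p i) < / (INR n + 1)) /\
    eps <= Rabs (f (snd p) - f (fst p))).
  { intro n. apply NNPP; intro Hc. apply Hn. exists (/ (INR n + 1)). split.
    { apply Rinv_0_lt_compat; pose proof (pos_INR n); lra. }
    intros x y Hxy. apply Rnot_le_lt. intro Hle. apply Hc. exists (x, y). simpl. auto. }
  destruct (choice _ Hs) as [g Hg].
  destruct (torus_subseq_close d (fun n => fst (g n))) as [phi [z [Hphi Hz]]].
  destruct (proj2 (proj2 Hf) z (eps / 2) ltac:(lra)) as [dz [Hdz Pz]].
  destruct (Hz (dz / 2) ltac:(lra)) as [N1 HN1].
  destruct (inv_INR_succ_small (dz / 2) ltac:(lra)) as [N2 HN2].
  pose proof (strict_incr_ge phi Hphi (Nat.max N1 N2)).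
  set (n := phi (Nat.max N1 N2)) in *.
  destruct (Hg n) as [Hclose Hfar]. set (x := fst (g n)) in *. set (y := snd (g n)) in *.
  assert (Hx : forall i, (i < d)%nat -> Rabs (vfrac x i - z i) < dz / 2) by (intros; apply HN1; auto; lia).
  assert (Hn2 : / (INR n + 1) < dz / 2) by (apply HN2; lia).
  assert (A1 : Rabs (f x - f z) < eps / 2).
  { rewrite <- (Cper_vfrac d f x Hf). apply Pz. intros i Hi. specialize (Hx i Hi). lra. }
  assert (A2 : Rabs (f y - f z) < eps / 2).
  { rewrite <- (Cper_congr_int d f y (vadd y (fun i => vfrac x i - x i)) Hf).
    - apply Pz. intros i Hi. specialize (Hx i Hi). specialize (Hclose i Hi). unfold vadd.
      replace (y i + (vfrac x i - x i) - z i) with ((y i - x i) + (vfrac x i - z i)) by ring.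
      eapply Rle_lt_trans; [apply Rabs_triang|]. lra.
    - intros i Hi. exists (- Int_part (x i))%Z. unfold vadd, vfrac. rewrite opp_IZR. ring. }
  assert (Rabs (f y - f x) < eps); [|lra].
  replace (f y - f x) with ((f y - f z) + - (f x - f z)) by ring.
  eapply Rle_lt_trans; [apply Rabs_triang|]. rewrite Rabs_Ropp. lra.
Qed.

Lemma Cper_bounded d f : Cper d f -> exists C, 0 <= C /\ forall x, Rabs (f x) <= C.
Proof.
  intros Hf. apply NNPP. intro Hn.
  assert (Hs : forall n : nat, exists x : vec, INR n < Rabs (f x)).
  { intro n. apply NNPP; intro Hc. apply Hn. exists (INR n). split. apply pos_INR.
    intros x. apply Rnot_lt_le. intro. apply Hc. exists x; auto. }
  destruct (choice _ Hs) as [g Hg].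
  destruct (torus_subseq_close d g) as [phi [z [Hphi Hz]]].
  pose proof Hf as [_ [_ Fcont]].
  destruct (Fcont z 1 ltac:(lra)) as [dz [Hdz Pz]].
  destruct (Hz dz Hdz) as [N1 HN1].
  destruct (INR_unbounded (Rabs (f z) + 1)) as [N2 HN2].
  set (N := Nat.max N1 N2).
  assert (Hbig : Rabs (f z) + 1 <= INR (phi N)).
  { apply HN2. pose proof (strict_incr_ge phi Hphi N). unfold N in *. lia. }
  assert (Hnear : Rabs (f (vfrac (g (phi N))) - f z) < 1) by (apply Pz; intros; apply HN1; auto; lia).
  rewrite (Cper_vfrac d) in Hnear by auto.
  specialize (Hg (phi N)). pose proof (Rabs_triang_inv (f (g (phi N))) (f z)). lra.
Qed.

Lemma meas_ext (m : meas) f g : (forall x, f x = g x) -> m f = m g.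
Proof. intros H. f_equal. now apply functional_extensionality. Qed.

Lemma IsMeasure_of_lin d (m : meas) :
  (forall a b f g, Cper d f -> Cper d g -> m (fun x => a * f x + b * g x) = a * m f + b * m g) ->
  (forall f, Cper d f -> (forall x, 0 <= f x) -> 0 <= m f) -> IsMeasure d m.
Proof.
  intros Hlin Hpos. split; [|split]; auto.
  - intros f g Hf Hg. rewrite <- (meas_ext _ (fun x => 1 * f x + 1 * g x)) by (intros; ring).
    rewrite Hlin; auto. ring.
  - intros a f Hf. rewrite <- (meas_ext _ (fun x => a * f x + 0 * f x)) by (intros; ring).
    rewrite Hlin; auto. ring.
Qed.

Section Measures.
Variable d : nat.
Variable m : meas.
Hypothesis Hm : IsMeasure d m.

Lemma meas_lin a b f g : Cper d f -> Cper d g ->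
  m (fun x => a * f x + b * g x) = a * m f + b * m g.
Proof.
  intros Hf Hg. destruct Hm as [H1 [H2 _]].
  rewrite H1 by (apply Cper_scal; auto). rewrite !H2; auto.
Qed.

Lemma meas_scal a f : Cper d f -> m (fun x => a * f x) = a * m f.
Proof. intros; destruct Hm as [_ [H2 _]]; auto. Qed.

Lemma meas_minus f g : Cper d f -> Cper d g -> m (fun x => f x - g x) = m f - m g.
Proof.
  intros. rewrite <- (meas_ext m (fun x => 1 * f x + (-1) * g x)) by (intros; ring).
  rewrite meas_lin; auto; ring.
Qed.

Lemma meas_const c : m (fun _ => c) = c * mass m.
Proof.
  rewrite <- (meas_ext m (fun x => c * (fun _ => 1) x)) by (intros; ring).
  apply meas_scal, Cper_const.
Qed.

Lemma meas_ge0 f : Cper d f -> (forall x, 0 <= f x) -> 0 <= m f.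
Proof. destruct Hm as [_ [_ H3]]; auto. Qed.

Lemma meas_le f g : Cper d f -> Cper d g -> (forall x, f x <= g x) -> m f <= m g.
Proof.
  intros Hf Hg Hfg. assert (0 <= m (fun x => g x - f x)).
  { apply meas_ge0. apply Cper_minus; auto. intros x; specialize (Hfg x); lra. }
  rewrite meas_minus in H; auto. lra.
Qed.

Lemma mass_ge0 : 0 <= mass m.
Proof. apply meas_ge0. apply Cper_const. intros; lra. Qed.

Lemma meas_abs_le f c : Cper d f -> (forall x, Rabs (f x) <= c) -> Rabs (m f) <= c * mass m.
Proof.
  intros Hf Hc. rewrite <- meas_const.
  assert (m f <= m (fun _ => c)).
  { apply meas_le; auto. apply Cper_const. intros x; specialize (Hc x).
    apply Rabs_le_between in Hc; lra. }
  assert (m (fun x => -1 * f x) <= m (fun _ => c)).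
  { apply meas_le; auto. apply Cper_scal; auto. apply Cper_const.
    intros x; specialize (Hc x). apply Rabs_le_between in Hc; lra. }
  rewrite meas_scal in H0; auto. apply Rabs_le. lra.
Qed.

End Measures.

Lemma transl_unif_cont d f : Cper d f -> forall eps, 0 < eps -> exists delta, 0 < delta /\
  forall a b : vec, (forall i, (i < d)%nat -> Rabs (a i - b i) < delta) ->
  forall x, Rabs (transl a f x - transl b f x) < eps.
Proof.
  intros Hf eps He. destruct (Cper_unif_cont d f Hf eps He) as [dl [Hd H]].
  exists dl; split; auto. intros a b Hab x. unfold transl. apply H. intros i Hi. unfold vadd.
  replace (x i + a i - (x i + b i)) with (a i - b i) by ring. auto.
Qed.

Lemma meas_transl_unif_cont d f : Cper d f -> forall eps, 0 < eps -> exists delta, 0 < delta /\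
  forall a b : vec, (forall i, (i < d)%nat -> Rabs (a i - b i) < delta) ->
  forall m, IsMeasure d m -> Rabs (m (transl a f) - m (transl b f)) <= eps * mass m.
Proof.
  intros Hf eps He. destruct (transl_unif_cont d f Hf eps He) as [dl [Hd H]].
  exists dl; split; auto. intros a b Hab m Hm.
  rewrite <- (meas_minus d); auto; try apply Cper_transl; auto.
  apply (meas_abs_le d); auto. apply Cper_minus; apply Cper_transl; auto.
  intros x. left. apply H; auto.
Qed.

(** * Real analysis *)

Lemma continuous_eps_delta (h : R -> R) t : continuous h t <->
  forall eps, 0 < eps -> exists delta, 0 < delta /\
    forall u, Rabs (u - t) < delta -> Rabs (h u - h t) < eps.
Proof.
  split.
  - intros H. apply continuity_pt_filterlim in H. intros eps He.
    destruct (H eps He) as [dl [Hd Hdl]]. exists dl; split; auto.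
    intros u Hu. destruct (Req_dec u t). { subst. rewrite Rminus_diag, Rabs_R0. auto. }
    apply (Hdl u). split. { split. exact I. auto. } simpl. unfold Rdist; auto.
  - intros H. apply continuity_pt_filterlim. intros eps He.
    destruct (H eps He) as [dl [Hd Hdl]]. exists dl; split; auto.
    intros x [_ Hx]. simpl in *. unfold Rdist in *. auto.
Qed.

Lemma continuous_exp_lin c t : continuous (fun u => exp (- (c * u))) t.
Proof. apply (ex_derive_continuous (K:=R_AbsRing) (V:=R_NormedModule)). auto_derive. auto. Qed.

Lemma ex_RInt_of_continuous (h : R -> R) a b : (forall t, continuous h t) -> ex_RInt h a b.
Proof. intros H. apply (ex_RInt_continuous (V:=R_CompleteNormedModule)). intros; auto. Qed.

Lemma ex_RInt_lincomb (f g : R -> R) a b p q : ex_RInt f a b -> ex_RInt g a b ->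
  ex_RInt (fun x => p * f x + q * g x) a b.
Proof.
  intros Hf Hg. apply (ex_RInt_plus (fun x => p * f x) (fun x => q * g x)).
  apply (ex_RInt_scal f a b p Hf). apply (ex_RInt_scal g a b q Hg).
Qed.

Lemma RInt_lincomb (f g : R -> R) a b p q : ex_RInt f a b -> ex_RInt g a b ->
  RInt (fun x => p * f x + q * g x) a b = p * RInt f a b + q * RInt g a b.
Proof.
  intros Hf Hg.
  rewrite (RInt_plus (fun x => p * f x) (fun x => q * g x)).
  - assert (E1 : RInt (fun x => p * f x) a b = p * RInt f a b) by apply (RInt_scal f a b p Hf).
    assert (E2 : RInt (fun x => q * g x) a b = q * RInt g a b) by apply (RInt_scal g a b q Hg).
    unfold plus; simpl. now rewrite E1, E2.
  - apply (ex_RInt_scal f a b p Hf).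
  - apply (ex_RInt_scal g a b q Hg).
Qed.

Lemma RInt_Chasles_R (h : R -> R) a b c : ex_RInt h a b -> ex_RInt h b c ->
  RInt h a b + RInt h b c = RInt h a c.
Proof. intros. apply (RInt_Chasles h a b c); auto. Qed.

Lemma RInt_const_R c a b : RInt (fun _ => c) a b = (b - a) * c.
Proof. now rewrite RInt_const. Qed.

Lemma RInt_avg_close (g : R -> R) a t c eta : 0 < t -> ex_RInt g a (a + t) ->
  (forall u, a <= u <= a + t -> Rabs (g u - c) <= eta) -> Rabs (/ t * RInt g a (a + t) - c) <= eta.
Proof.
  intros Ht Hex Hg.
  assert (Hc : ex_RInt (fun _ : R => 1) a (a + t)) by (apply ex_RInt_const).
  replace (/ t * RInt g a (a + t) - c) with (/ t * RInt (fun u => 1 * g u + (- c) * 1) a (a + t))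
    by (rewrite RInt_lincomb, RInt_const_R by auto; field; lra).
  rewrite Rabs_mult, Rabs_right by (apply Rle_ge; left; apply Rinv_0_lt_compat; lra).
  apply Rle_trans with (/ t * ((a + t - a) * eta)); [|right; field; lra].
  apply Rmult_le_compat_l. left; apply Rinv_0_lt_compat; lra.
  apply abs_RInt_le_const. lra. apply ex_RInt_lincomb; auto.
  intros u Hu. replace (1 * g u + - c * 1) with (g u - c) by ring. auto.
Qed.

Lemma RInt_shift (h : R -> R) s a b : (forall t, continuous h t) ->
  RInt (fun t => h (t + s)) a b = RInt h (a + s) (b + s).
Proof.
  intros Hc.
  assert (E := RInt_comp_lin (V:=R_CompleteNormedModule) h 1 s a b (ex_RInt_of_continuous _ _ _ Hc)).
  replace (a + s) with (1 * a + s) by ring. replace (b + s) with (1 * b + s) by ring.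
  rewrite <- E. apply RInt_ext. intros. unfold scal; simpl; unfold mult; simpl.
  now rewrite !Rmult_1_l.
Qed.

Lemma RInt_exp c a b : c <> 0 ->
  RInt (fun t => exp (- (c * t))) a b = (exp (- (c * a)) - exp (- (c * b))) / c.
Proof.
  intros Hc. apply (is_RInt_unique (V:=R_CompleteNormedModule)).
  replace ((exp (- (c * a)) - exp (- (c * b))) / c) with
    (minus ((fun t => - exp (- (c * t)) / c) b) ((fun t => - exp (- (c * t)) / c) a)).
  2:{ unfold minus, plus, opp; simpl. field; auto. }
  apply (is_RInt_derive (V:=R_CompleteNormedModule) (fun t => - exp (- (c * t)) / c)).
  - intros x _. auto_derive; auto. field; auto.
  - intros x _. apply continuous_exp_lin.
Qed.

Lemma ex_RInt_exp c a b : ex_RInt (fun t => exp (- (c * t))) a b.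
Proof. apply ex_RInt_of_continuous. intros; apply continuous_exp_lin. Qed.

Lemma exp_le_compat x y : x <= y -> exp x <= exp y.
Proof. intros [H|H]; [left; now apply exp_increasing | subst; lra]. Qed.

Lemma exp_neg_le1 x : 0 <= x -> exp (- x) <= 1.
Proof. intros. rewrite <- exp_0. apply exp_le_compat. lra. Qed.

Lemma one_minus_exp_neg x : 0 <= x -> 0 <= 1 - exp (- x) <= x.
Proof. intros. split. pose proof (exp_neg_le1 x H); lra. pose proof (exp_ineq1_le (- x)). lra. Qed.

Lemma exp_tail K c : 0 <= K -> 0 < c -> forall eps, 0 < eps -> exists M, 0 <= M /\
  forall T, M <= T -> K * exp (- (c * T)) < eps.
Proof.
  intros HK Hc eps He. exists (K / (c * eps)).
  assert (HM : 0 <= K / (c * eps)).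
  { unfold Rdiv. apply Rmult_le_pos; auto. left; apply Rinv_0_lt_compat; nra. }
  split; auto. intros T HT.
  assert (Hc0 : 0 <= c * T) by nra.
  assert (Hinv : exp (- (c * T)) <= / (1 + c * T)).
  { rewrite exp_Ropp. apply Rinv_le_contravar. lra. apply exp_ineq1_le. }
  apply Rle_lt_trans with (K * / (1 + c * T)). apply Rmult_le_compat_l; auto.
  assert (HcT : c * T >= K / eps).
  { apply Rle_ge. apply Rle_trans with (c * (K / (c * eps))).
    right. field; split; lra. apply Rmult_le_compat_l; lra. }
  apply (Rmult_lt_reg_r (1 + c * T)). lra. rewrite Rmult_assoc, Rinv_l, Rmult_1_r by lra.
  assert (K <= eps * (c * T)).
  { apply Rle_trans with (eps * (K / eps)). right; field; lra. apply Rmult_le_compat_l; lra. }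
  nra.
Qed.

Lemma cauchy_at_pinfty (F B : R -> R) :
  (forall eps, 0 < eps -> exists M, 0 <= M /\ forall T, M <= T -> B T < eps) ->
  (forall T1 T2, 0 <= T1 <= T2 -> Rabs (F T2 - F T1) <= B T1) ->
  exists L, forall eps, 0 < eps -> exists M, 0 <= M /\ forall T, M <= T -> Rabs (F T - L) < eps.
Proof.
  intros HB Hdiff. set (u := fun n : nat => F (INR n)).
  assert (Hc : Cauchy_crit u).
  { intros eps He. destruct (HB eps He) as [M [HM PM]].
    destruct (INR_unbounded M) as [N HN]. exists N.
    intros n m Hn Hm. unfold Rdist, u.
    destruct (Rle_dec (INR n) (INR m)).
    - rewrite <- Rabs_Ropp, Ropp_minus_distr.
      eapply Rle_lt_trans. apply Hdiff. split; auto. apply pos_INR. apply PM, HN; lia.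
    - eapply Rle_lt_trans. apply Hdiff. split; [apply pos_INR|lra]. apply PM, HN; lia. }
  destruct (Rcomplete.R_complete u Hc) as [L HL]. exists L.
  intros eps He. destruct (HB (eps / 2) ltac:(lra)) as [M [HM PM]]. exists M; split; auto.
  intros T HT. destruct (HL (eps / 2) ltac:(lra)) as [N1 HN1].
  destruct (INR_unbounded T) as [N2 HN2].
  set (n := Nat.max N1 N2). assert (Tn : T <= INR n) by (apply HN2; lia).
  specialize (HN1 n ltac:(unfold n; lia)). unfold Rdist, u in HN1.
  pose proof (Hdiff T (INR n) ltac:(lra)). specialize (PM T HT).
  replace (F T - L) with (- (F (INR n) - F T) + (F (INR n) - L)) by ring.
  eapply Rle_lt_trans. apply Rabs_triang. rewrite Rabs_Ropp. lra.
Qed.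

Definition is_RInt_0_oo (h : R -> R) (L : R) : Prop :=
  (forall T, 0 <= T -> ex_RInt h 0 T) /\
  (forall eps, 0 < eps -> exists M, 0 <= M /\ forall T, M <= T -> Rabs (RInt h 0 T - L) < eps).

Lemma is_RInt_0_oo_ImproperInt h L : is_RInt_0_oo h L -> ImproperInt h L.
Proof.
  intros [H1 H2]. split.
  - intros T HT. exists (ex_RInt_Reals_0 _ _ _ (H1 T HT)). auto.
  - intros eps He. destruct (H2 eps He) as [M [HM HMT]]. exists M. intros T pr HT.
    rewrite <- RInt_Reals. auto.
Qed.

Lemma is_RInt_0_oo_unique h L1 L2 : is_RInt_0_oo h L1 -> is_RInt_0_oo h L2 -> L1 = L2.
Proof.
  intros [_ H1] [_ H2]. apply NNPP; intro Hn.
  assert (He : 0 < Rabs (L1 - L2) / 2).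
  { assert (L1 - L2 <> 0) by lra. pose proof (Rabs_pos_lt _ H). lra. }
  destruct (H1 _ He) as [M1 [_ P1]]. destruct (H2 _ He) as [M2 [_ P2]].
  specialize (P1 (Rmax M1 M2) (Rmax_l _ _)). specialize (P2 (Rmax M1 M2) (Rmax_r _ _)).
  set (I := RInt h 0 (Rmax M1 M2)) in *.
  pose proof (Rabs_triang (L1 - I) (I - L2)). replace (L1 - I + (I - L2)) with (L1 - L2) in H by ring.
  rewrite <- (Rabs_Ropp (L1 - I)), Ropp_minus_distr in H. lra.
Qed.

Lemma is_RInt_0_oo_ext h g L : (forall t, h t = g t) -> is_RInt_0_oo h L -> is_RInt_0_oo g L.
Proof. intros E H. replace g with h; auto. now apply functional_extensionality. Qed.

Lemma is_RInt_0_oo_lin h g Lh Lg p q : is_RInt_0_oo h Lh -> is_RInt_0_oo g Lg ->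
  is_RInt_0_oo (fun t => p * h t + q * g t) (p * Lh + q * Lg).
Proof.
  intros [H1 H2] [G1 G2]. split.
  - intros; apply ex_RInt_lincomb; auto.
  - intros eps He. set (e' := eps / (2 * (Rabs p + Rabs q + 1))).
    assert (He' : 0 < e').
    { unfold e'. apply Rdiv_lt_0_compat; auto. pose proof (Rabs_pos p); pose proof (Rabs_pos q); lra. }
    destruct (H2 e' He') as [M1 [HM1 P1]]. destruct (G2 e' He') as [M2 [HM2 P2]].
    exists (Rmax M1 M2). split. { eapply Rle_trans; [apply HM1|apply Rmax_l]. }
    intros T HT. pose proof (Rmax_l M1 M2); pose proof (Rmax_r M1 M2).
    rewrite RInt_lincomb by (apply H1 || apply G1; lra).
    replace (p * RInt h 0 T + q * RInt g 0 T - (p * Lh + q * Lg)) with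
      (p * (RInt h 0 T - Lh) + q * (RInt g 0 T - Lg)) by ring.
    apply Rabs_lincomb_lt; auto; left; [apply P1 | apply P2]; lra.
Qed.

Lemma is_RInt_0_oo_scal h L c : is_RInt_0_oo h L -> is_RInt_0_oo (fun t => c * h t) (c * L).
Proof.
  intros H. eapply is_RInt_0_oo_ext;
    [| replace (c * L) with (c * L + 0 * L) by ring; apply (is_RInt_0_oo_lin h h L L c 0 H H)].
  intros; simpl; ring.
Qed.

Lemma is_RInt_0_oo_le h g Lh Lg : is_RInt_0_oo h Lh -> is_RInt_0_oo g Lg ->
  (forall t, 0 <= t -> h t <= g t) -> Lh <= Lg.
Proof.
  intros [H1 H2] [G1 G2] Hle. apply Rnot_lt_le. intro Hlt.
  set (e := (Lh - Lg) / 2). assert (0 < e) by (unfold e; lra).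
  destruct (H2 e H) as [M1 [HM1 P1]]. destruct (G2 e H) as [M2 [HM2 P2]].
  set (T := Rmax M1 M2). assert (0 <= T) by (unfold T; eapply Rle_trans; [apply HM1|apply Rmax_l]).
  specialize (P1 T (Rmax_l _ _)). specialize (P2 T (Rmax_r _ _)).
  assert (RInt h 0 T <= RInt g 0 T) by (apply RInt_le; auto; intros x Hx; apply Hle; lra).
  apply Rabs_def2 in P1. apply Rabs_def2 in P2. unfold e in *. lra.
Qed.

Lemma is_RInt_0_oo_abs_le h g Lh Lg : is_RInt_0_oo h Lh -> is_RInt_0_oo g Lg ->
  (forall t, 0 <= t -> Rabs (h t) <= g t) -> Rabs Lh <= Lg.
Proof.
  intros Hh Hg Hle. apply Rabs_le. split.
  - replace (- Lg) with (-1 * Lg) by ring.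
    apply (is_RInt_0_oo_le (fun t => -1 * g t) h); auto. apply is_RInt_0_oo_scal; auto.
    intros t Ht. specialize (Hle t Ht). apply Rabs_le_between in Hle. lra.
  - apply (is_RInt_0_oo_le h g); auto. intros t Ht. specialize (Hle t Ht).
    apply Rabs_le_between in Hle. lra.
Qed.

Lemma is_RInt_0_oo_exp c : 0 < c -> is_RInt_0_oo (fun t => exp (- (c * t))) (/ c).
Proof.
  intros Hc. split.
  - intros; apply ex_RInt_exp.
  - intros eps He. destruct (exp_tail (/ c) c ltac:(left; apply Rinv_0_lt_compat; lra) Hc eps He)
      as [M [HM PM]].
    exists M; split; auto. intros T HT. rewrite RInt_exp by lra.
    rewrite Rmult_0_r, Ropp_0, exp_0.
    replace ((1 - exp (- (c * T))) / c - / c) with (- (/ c * exp (- (c * T)))) by (field; lra).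
    rewrite Rabs_Ropp, Rabs_right; auto.
    apply Rle_ge, Rmult_le_pos. left; apply Rinv_0_lt_compat; lra. left; apply exp_pos.
Qed.

Lemma ex_is_RInt_0_oo_exp_bounded (h : R -> R) K c : 0 < c -> (forall t, continuous h t) ->
  (forall t, 0 <= t -> Rabs (h t) <= K * exp (- (c * t))) -> exists L, is_RInt_0_oo h L.
Proof.
  intros Hc Hcont Hb.
  assert (HK : 0 <= K).
  { specialize (Hb 0 (Rle_refl 0)). pose proof (Rabs_pos (h 0)).
    rewrite Rmult_0_r, Ropp_0, exp_0 in Hb. lra. }
  assert (Hex : forall a b, ex_RInt h a b) by (intros; apply ex_RInt_of_continuous; auto).
  assert (Hdiff : forall T1 T2, 0 <= T1 <= T2 ->
    Rabs (RInt h 0 T2 - RInt h 0 T1) <= K / c * exp (- (c * T1))).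
  { intros T1 T2 HT. rewrite <- (RInt_Chasles_R h 0 T1 T2) by auto.
    unfold Rminus. rewrite Rplus_comm, <- Rplus_assoc, Rplus_opp_l, Rplus_0_l.
    assert (Hk : ex_RInt (fun t => K * exp (- (c * t))) T1 T2)
      by (apply ex_RInt_of_continuous; intros;
          apply (continuous_mult (fun _ => K)); [apply continuous_const | apply continuous_exp_lin]).
    eapply Rle_trans. apply abs_RInt_le. lra. auto.
    eapply Rle_trans. apply (RInt_le _ (fun t => K * exp (- (c * t)))); auto. lra.
    { apply ex_RInt_of_continuous; intros; apply continuous_Rabs_comp; auto. }
    { intros; apply Hb; lra. }
    assert (E : RInt (fun t => K * exp (- (c * t))) T1 T2 = K * RInt (fun t => exp (- (c * t))) T1 T2)
      by (apply (RInt_scal (fun t => exp (- (c * t))) T1 T2 K); apply ex_RInt_exp).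
    rewrite E, RInt_exp by lra.
    unfold Rdiv. rewrite (Rmult_comm (exp (- (c * T1)) - exp (- (c * T2))) (/ c)), <- Rmult_assoc.
    apply Rmult_le_compat_l.
    { apply Rmult_le_pos; auto; left; apply Rinv_0_lt_compat; auto. }
    pose proof (exp_pos (- (c * T2))). lra. }
  destruct (cauchy_at_pinfty (fun T => RInt h 0 T) (fun T => K / c * exp (- (c * T)))) as [L HL].
  - apply exp_tail; auto. unfold Rdiv. apply Rmult_le_pos; auto. left; apply Rinv_0_lt_compat; auto.
  - exact Hdiff.
  - exists L. split; auto.
Qed.

Lemma is_RInt_0_oo_shift (h : R -> R) L s : (forall t, continuous h t) -> 0 <= s ->
  is_RInt_0_oo h L -> is_RInt_0_oo (fun t => h (t + s)) (L - RInt h 0 s).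
Proof.
  intros Hc Hs [H1 H2].
  assert (Hex : forall a b, ex_RInt h a b) by (intros; apply ex_RInt_of_continuous; auto).
  split.
  - intros T HT. apply ex_RInt_of_continuous. intros t. apply (continuous_comp (fun t => t + s) h).
    apply (continuous_plus (fun t => t) (fun _ => s)). apply continuous_id. apply continuous_const. auto.
  - intros eps He. destruct (H2 eps He) as [M [HM P]]. exists M; split; auto.
    intros T HT. rewrite RInt_shift, Rplus_0_l by auto.
    replace (RInt h s (T + s) - (L - RInt h 0 s)) with (RInt h 0 (T + s) - L).
    apply P; lra.
    rewrite <- (RInt_Chasles_R h 0 s (T + s)) by auto. ring.
Qed.

Lemma LimRight0_unique h L1 L2 : LimRight0 h L1 -> LimRight0 h L2 -> L1 = L2.
Proof.
  intros H1 H2. apply NNPP; intro Hn.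
  assert (He : 0 < Rabs (L1 - L2) / 2).
  { assert (L1 - L2 <> 0) by lra. pose proof (Rabs_pos_lt _ H). lra. }
  destruct (H1 _ He) as [d1 [Hd1 P1]]. destruct (H2 _ He) as [d2 [Hd2 P2]].
  set (t := Rmin d1 d2 / 2). assert (0 < Rmin d1 d2) by (apply Rmin_pos; auto).
  specialize (P1 t ltac:(unfold t; pose proof (Rmin_l d1 d2); lra)).
  specialize (P2 t ltac:(unfold t; pose proof (Rmin_r d1 d2); lra)).
  pose proof (Rabs_triang (L1 - h t) (h t - L2)).
  replace (L1 - h t + (h t - L2)) with (L1 - L2) in H0 by ring.
  rewrite <- (Rabs_Ropp (L1 - h t)), Ropp_minus_distr in H0. lra.
Qed.

Lemma LimRight0_lin h g Lh Lg p q : LimRight0 h Lh -> LimRight0 g Lg ->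
  LimRight0 (fun t => p * h t + q * g t) (p * Lh + q * Lg).
Proof.
  intros H G eps He. set (e' := eps / (2 * (Rabs p + Rabs q + 1))).
  assert (He' : 0 < e').
  { unfold e'. apply Rdiv_lt_0_compat; auto. pose proof (Rabs_pos p); pose proof (Rabs_pos q); lra. }
  destruct (H e' He') as [d1 [Hd1 P1]]. destruct (G e' He') as [d2 [Hd2 P2]].
  exists (Rmin d1 d2). split. apply Rmin_pos; auto.
  intros t Ht. pose proof (Rmin_l d1 d2); pose proof (Rmin_r d1 d2).
  replace (p * h t + q * g t - (p * Lh + q * Lg)) with (p * (h t - Lh) + q * (g t - Lg)) by ring.
  apply Rabs_lincomb_lt; auto; left; [apply P1 | apply P2]; lra.
Qed.

Lemma LimRight0_ext h g L : (forall t, 0 < t -> h t = g t) -> LimRight0 h L -> LimRight0 g L.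
Proof.
  intros E H eps He. destruct (H eps He) as [dl [Hd P]]. exists dl; split; auto.
  intros t Ht. rewrite <- E by lra. auto.
Qed.

Lemma LimRight0_const c : LimRight0 (fun _ => c) c.
Proof. intros eps He. exists 1; split; [lra|]. intros; rewrite Rminus_diag, Rabs_R0; auto. Qed.

Lemma LimRight0_scal h L c : LimRight0 h L -> LimRight0 (fun t => c * h t) (c * L).
Proof.
  intros H. eapply LimRight0_ext; [| replace (c * L) with (c * L + 0 * 0) by ring;
    apply (LimRight0_lin _ _ _ _ c 0 H (LimRight0_const 0))].
  intros; simpl; ring.
Qed.

Lemma LimRight0_ge0 h L : LimRight0 h L -> (forall t, 0 < t -> 0 <= h t) -> 0 <= L.
Proof.
  intros H Hp. apply Rnot_lt_le. intro Hl. destruct (H (- L) ltac:(lra)) as [dl [Hd P]].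
  specialize (P (dl / 2) ltac:(lra)). specialize (Hp (dl / 2) ltac:(lra)).
  apply Rabs_def2 in P. lra.
Qed.

Lemma LimRight0_cauchy h : (forall eps, 0 < eps -> exists delta, 0 < delta /\
  forall s t, 0 < s < delta -> 0 < t < delta -> Rabs (h s - h t) < eps) -> exists L, LimRight0 h L.
Proof.
  intros H. set (u := fun n : nat => h (/ (INR n + 1))).
  assert (Hpos : forall n, 0 < / (INR n + 1))
    by (intro n; apply Rinv_0_lt_compat; pose proof (pos_INR n); lra).
  assert (Hc : Cauchy_crit u).
  { intros eps He. destruct (H eps He) as [dl [Hd P]].
    destruct (inv_INR_succ_small dl Hd) as [N HN].
    exists N. intros n m Hn Hm. unfold Rdist, u. apply P; split; auto. }
  destruct (Rcomplete.R_complete u Hc) as [L HL]. exists L.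
  intros eps He. destruct (H (eps / 2) ltac:(lra)) as [dl [Hd P]]. exists dl; split; auto.
  intros t Ht. destruct (HL (eps / 2) ltac:(lra)) as [N1 HN1].
  destruct (inv_INR_succ_small dl Hd) as [N2 HN2].
  set (n := Nat.max N1 N2). specialize (HN1 n ltac:(unfold n; lia)).
  specialize (HN2 n ltac:(unfold n; lia)).
  unfold Rdist, u in HN1. specialize (P t (/ (INR n + 1)) Ht ltac:(split; auto)).
  replace (h t - L) with ((h t - h (/ (INR n + 1))) + (h (/ (INR n + 1)) - L)) by ring.
  eapply Rle_lt_trans. apply Rabs_triang. lra.
Qed.

Lemma continuous_bound_left_closed (Phi : R -> R) a c eps : continuous Phi c ->
  (forall dl, 0 < dl -> exists u, c - dl < u <= c /\ Rabs (Phi u - Phi a) <= eps * (u - a)) ->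
  0 <= eps -> Rabs (Phi c - Phi a) <= eps * (c - a).
Proof.
  intros Hc Hu He. apply Rnot_lt_le. intro Hlt.
  set (g := Rabs (Phi c - Phi a) - eps * (c - a)).
  destruct (proj1 (continuous_eps_delta Phi c) Hc (g / 2) ltac:(unfold g; lra)) as [dl [Hdl P]].
  destruct (Hu dl Hdl) as [u [[Hu1 Hu2] Hbu]].
  specialize (P u ltac:(apply Rabs_def1; lra)).
  pose proof (Rabs_triang (Phi c - Phi u) (Phi u - Phi a)) as Htri.
  replace (Phi c - Phi u + (Phi u - Phi a)) with (Phi c - Phi a) in Htri by ring.
  rewrite <- Rabs_Ropp, Ropp_minus_distr in P.
  assert (eps * (u - a) <= eps * (c - a)) by (apply Rmult_le_compat_l; lra).
  unfold g in *. lra.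
Qed.

(* The least upper bound of the points where [|Phi u - Phi a| <= eps (u - a)] holds is one
   of them by continuity, and cannot lie below [b] because of the right derivative. *)
Lemma right_deriv0_bound (Phi : R -> R) a b eps : a <= b -> 0 < eps ->
  (forall u, a <= u <= b -> continuous Phi u) ->
  (forall u, a <= u < b -> LimRight0 (fun t => (Phi (u + t) - Phi u) / t) 0) ->
  Rabs (Phi b - Phi a) <= eps * (b - a).
Proof.
  intros Hab He Hc Hd.
  set (S := fun u => a <= u <= b /\ Rabs (Phi u - Phi a) <= eps * (u - a)).
  assert (HSa : S a) by (split; [lra|]; rewrite !Rminus_diag, Rabs_R0; lra).
  destruct (completeness S) as [c [Hub Hlub]].
  { exists b. intros u [Hu _]; lra. }
  { now exists a. }
  assert (Hac : a <= c) by (apply Hub, HSa).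
  assert (Hcb : c <= b) by (apply Hlub; intros u [Hu _]; lra).
  assert (HcS : Rabs (Phi c - Phi a) <= eps * (c - a)).
  { apply continuous_bound_left_closed; [apply Hc; lra | | lra].
    intros dl Hdl. apply NNPP; intro Hno. assert (c <= c - dl); [|lra].
    apply Hlub. intros u Hu. apply Rnot_lt_le. intro Hlt. apply Hno. exists u.
    split; [split; [lra | apply Hub, Hu] | apply Hu]. }
  destruct (Req_dec c b) as [->|Hne]; auto.
  destruct (Hd c ltac:(lra) eps He) as [dl [Hdl P]].
  set (t := Rmin (dl / 2) ((b - c) / 2)).
  assert (Ht : 0 < t < dl)
    by (unfold t; split; [apply Rmin_pos; lra | pose proof (Rmin_l (dl/2) ((b-c)/2)); lra]).
  assert (Ht2 : t <= (b - c) / 2) by (unfold t; apply Rmin_r).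
  specialize (P t Ht). rewrite Rminus_0_r in P.
  assert (Hq : Rabs (Phi (c + t) - Phi c) <= eps * t).
  { replace (Phi (c + t) - Phi c) with (t * ((Phi (c + t) - Phi c) / t)) by (field; lra).
    rewrite Rabs_mult, Rabs_right, Rmult_comm by lra. apply Rmult_le_compat_r; lra. }
  assert (HS : S (c + t)).
  { split. split; lra.
    pose proof (Rabs_triang (Phi (c + t) - Phi c) (Phi c - Phi a)) as Htr.
    replace (Phi (c + t) - Phi c + (Phi c - Phi a)) with (Phi (c + t) - Phi a) in Htr by ring. nra. }
  specialize (Hub _ HS). lra.
Qed.

Lemma right_deriv0_const (Phi : R -> R) a b : a <= b ->
  (forall u, a <= u <= b -> continuous Phi u) ->
  (forall u, a <= u < b -> LimRight0 (fun t => (Phi (u + t) - Phi u) / t) 0) -> Phi b = Phi a.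
Proof.
  intros Hab Hc Hd. apply NNPP; intro Hn.
  set (D := Rabs (Phi b - Phi a)). assert (HD : 0 < D) by (apply Rabs_pos_lt; lra).
  assert (Hb := right_deriv0_bound Phi a b (D / (2 * (b - a) + 1)) Hab
                  ltac:(apply Rdiv_lt_0_compat; lra) Hc Hd).
  fold D in Hb. apply (Rmult_le_compat_r (2 * (b - a) + 1)) in Hb; [|lra].
  replace (D / (2 * (b - a) + 1) * (b - a) * (2 * (b - a) + 1)) with (D * (b - a)) in Hb
    by (field; lra).
  nra.
Qed.

(** * Resolvent and generator in one direction *)

Lemma sumR_ge0 n g : (forall i, 0 <= g i) -> 0 <= sumR n g.
Proof. intros H. induction n; simpl; [lra|]. specialize (H n). lra. Qed.

Lemma row_abs_le_sum (theta : nat -> nat -> R) d j i : (i < d)%nat ->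
  Rabs (theta j i) <= sumR d (fun i => Rabs (theta j i)).
Proof.
  induction d as [|n IH]; intros Hi; [lia|]. simpl.
  assert (H0 := sumR_ge0 n (fun i => Rabs (theta j i)) (fun i => Rabs_pos _)).
  pose proof (Rabs_pos (theta j n)).
  destruct (Nat.eq_dec i n) as [->|Hne]; [lra|]. specialize (IH ltac:(lia)). lra.
Qed.

Lemma rowvec_close d theta j delta : 0 < delta -> exists eta, 0 < eta /\
  forall u v : R, Rabs (u - v) < eta ->
    forall i, (i < d)%nat -> Rabs (rowvec theta j u i - rowvec theta j v i) < delta.
Proof.
  intros Hd. set (N := sumR d (fun i => Rabs (theta j i))).
  assert (HN : 0 <= N) by (apply sumR_ge0; intros; apply Rabs_pos).
  exists (delta / (N + 1)). split. apply Rdiv_lt_0_compat; lra.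
  intros u v Huv i Hi. unfold rowvec.
  replace (u * theta j i - v * theta j i) with ((u - v) * theta j i) by ring.
  rewrite Rabs_mult. pose proof (row_abs_le_sum theta d j i Hi). fold N in H.
  pose proof (Rabs_pos (u - v)).
  assert (Rabs (u - v) * (N + 1) < delta).
  { apply (Rmult_lt_compat_r (N + 1)) in Huv; [|lra].
    replace (delta / (N + 1) * (N + 1)) with delta in Huv by (field; lra). auto. }
  assert (Rabs (u - v) * Rabs (theta j i) <= Rabs (u - v) * N) by (apply Rmult_le_compat_l; auto).
  nra.
Qed.

Lemma meas_transl_rowvec_close d theta j f : Cper d f -> forall eps, 0 < eps ->
  exists eta, 0 < eta /\ forall u v : R, Rabs (u - v) < eta -> forall w m, IsMeasure d m ->
    Rabs (m (transl (vadd (rowvec theta j u) w) f) - m (transl (vadd (rowvec theta j v) w) f))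
      <= eps * mass m.
Proof.
  intros Hf eps He. destruct (meas_transl_unif_cont d f Hf eps He) as [d1 [Hd1 P]].
  destruct (rowvec_close d theta j d1 Hd1) as [eta [Heta Q]]. exists eta; split; auto.
  intros u v Huv w m Hm. apply P; auto. intros i Hi. unfold vadd.
  replace (rowvec theta j u i + w i - (rowvec theta j v i + w i))
    with (rowvec theta j u i - rowvec theta j v i) by ring. auto.
Qed.

Lemma Rdiv_succ_mul_le eps M : 0 < eps -> 0 <= M -> eps / (M + 1) * M <= eps.
Proof.
  intros He HM. apply Rle_trans with (eps / (M + 1) * (M + 1)); [|right; field; lra].
  apply Rmult_le_compat_l; [left; apply Rdiv_lt_0_compat|]; lra.
Qed.

Section Resolvent.
Variable d : nat.
Variable theta : nat -> nat -> R.
Variable beta : R.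
Variable r : nat -> R.
Hypothesis Hbeta : 0 < beta.

(* Its integral over [0, +oo) is the resolvent [A_j m f], the one-direction version of
   [mu |-> nu_mu]. *)
Definition weighted_orbit (j : nat) (m : meas) (f : vec -> R) (t : R) : R :=
  exp (- (beta * t * r j)) * m (transl (rowvec theta j t) f).

Definition resolvent j (m : meas) : meas :=
  fun f => epsilon (inhabits 0) (fun L => is_RInt_0_oo (weighted_orbit j m f) L).

Definition resolvent_upto j t (m : meas) : meas := fun f => RInt (weighted_orbit j m f) 0 t.

Definition Dop_at j t (m : meas) : meas := Dop theta beta r j (fun _ => t) m.

Definition generator j (X : meas) : meas :=
  fun f => epsilon (inhabits 0) (fun L => LimRight0 (fun t => / t * Dop_at j t X f) L).

Lemma Dop_weighted_orbit j s m f : Dop theta beta r j s m f = m f - weighted_orbit j m f (s j).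
Proof. reflexivity. Qed.

Lemma Dop_at_weighted_orbit j t m f : Dop_at j t m f = m f - weighted_orbit j m f t.
Proof. reflexivity. Qed.

Lemma Dop_ext_s j s s' m : s j = s' j -> Dop theta beta r j s m = Dop theta beta r j s' m.
Proof. intros H. unfold Dop. now rewrite H. Qed.

Lemma exp_beta_t_r j t : exp (- (beta * t * r j)) = exp (- ((beta * r j) * t)).
Proof. f_equal. ring. Qed.

Lemma weighted_orbit_cont j m f : IsMeasure d m -> Cper d f ->
  forall t, continuous (weighted_orbit j m f) t.
Proof.
  intros Hm Hf t. unfold weighted_orbit.
  apply (continuous_mult (fun u => exp (- (beta * u * r j))) (fun u => m (transl (rowvec theta j u) f))).
  - apply (continuous_ext (fun u => exp (- ((beta * r j) * u)))).
    + intros; symmetry; apply exp_beta_t_r.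
    + apply continuous_exp_lin.
  - apply continuous_eps_delta. intros eps He. pose proof (mass_ge0 d m Hm).
    destruct (meas_transl_rowvec_close d theta j f Hf (eps / 2 / (mass m + 1)))
      as [eta [Heta P]]. { apply Rdiv_lt_0_compat; lra. }
    exists eta; split; auto. intros u Hu.
    specialize (P u t Hu (fun _ => 0) m Hm). rewrite !(vadd_comm _ (fun _ => 0)) in P.
    replace (vadd (fun _ => 0) (rowvec theta j u)) with (rowvec theta j u) in P
      by (apply functional_extensionality; intro; unfold vadd; ring).
    replace (vadd (fun _ => 0) (rowvec theta j t)) with (rowvec theta j t) in P
      by (apply functional_extensionality; intro; unfold vadd; ring).
    pose proof (Rdiv_succ_mul_le (eps / 2) (mass m) ltac:(lra) H). lra.
Qed.

Lemma weighted_orbit_bound j m f C : IsMeasure d m -> Cper d f -> (forall x, Rabs (f x) <= C) ->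
  forall t, Rabs (weighted_orbit j m f t) <= C * mass m * exp (- ((beta * r j) * t)).
Proof.
  intros Hm Hf HC t. unfold weighted_orbit.
  rewrite Rabs_mult, Rabs_right by (apply Rle_ge; left; apply exp_pos).
  rewrite exp_beta_t_r, Rmult_comm. apply Rmult_le_compat_r. left; apply exp_pos.
  apply (meas_abs_le d); auto. apply Cper_transl; auto. intros x; unfold transl; auto.
Qed.

Lemma ex_resolvent j m f : 0 < r j -> IsMeasure d m -> Cper d f ->
  exists L, is_RInt_0_oo (weighted_orbit j m f) L.
Proof.
  intros Hr Hm Hf. destruct (Cper_bounded d f Hf) as [C [HC0 HC]].
  apply (ex_is_RInt_0_oo_exp_bounded _ (C * mass m) (beta * r j)). nra.
  apply weighted_orbit_cont; auto. intros t _. apply weighted_orbit_bound; auto.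
Qed.

Lemma resolvent_spec j m f : 0 < r j -> IsMeasure d m -> Cper d f ->
  is_RInt_0_oo (weighted_orbit j m f) (resolvent j m f).
Proof. intros Hr Hm Hf. unfold resolvent. apply epsilon_spec. apply ex_resolvent; auto. Qed.

Lemma resolvent_eq j m f L : is_RInt_0_oo (weighted_orbit j m f) L -> resolvent j m f = L.
Proof.
  intros H. unfold resolvent. apply (is_RInt_0_oo_unique (weighted_orbit j m f)); auto.
  apply epsilon_spec. eauto.
Qed.

Lemma weighted_orbit_ext j m m' f : Cper d f -> MeasEq d m m' ->
  weighted_orbit j m f = weighted_orbit j m' f.
Proof.
  intros Hf H. apply functional_extensionality; intro t. unfold weighted_orbit.
  rewrite H; auto. apply Cper_transl; auto.
Qed.

Lemma resolvent_ext j m m' : MeasEq d m m' -> MeasEq d (resolvent j m) (resolvent j m').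
Proof. intros H f Hf. unfold resolvent. now rewrite (weighted_orbit_ext j m m' f Hf H). Qed.

Lemma weighted_orbit_lin j m a b f g : IsMeasure d m -> Cper d f -> Cper d g -> forall t,
  weighted_orbit j m (fun x => a * f x + b * g x) t =
  a * weighted_orbit j m f t + b * weighted_orbit j m g t.
Proof.
  intros Hm Hf Hg t. unfold weighted_orbit.
  change (transl (rowvec theta j t) (fun x => a * f x + b * g x)) with
    (fun x => a * transl (rowvec theta j t) f x + b * transl (rowvec theta j t) g x).
  rewrite (meas_lin d m Hm); try apply Cper_transl; auto. ring.
Qed.

Lemma weighted_orbit_ge0 j m f t : IsMeasure d m -> Cper d f -> (forall x, 0 <= f x) ->
  0 <= weighted_orbit j m f t.
Proof.
  intros Hm Hf Hp. unfold weighted_orbit. apply Rmult_le_pos. left; apply exp_pos.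
  apply (meas_ge0 d); auto. apply Cper_transl; auto. intros; unfold transl; auto.
Qed.

Lemma resolvent_IsMeasure j m : 0 < r j -> IsMeasure d m -> IsMeasure d (resolvent j m).
Proof.
  intros Hr Hm. apply IsMeasure_of_lin.
  - intros a b f g Hf Hg. apply resolvent_eq.
    eapply is_RInt_0_oo_ext;
      [|apply (is_RInt_0_oo_lin _ _ _ _ a b (resolvent_spec j m f Hr Hm Hf) (resolvent_spec j m g Hr Hm Hg))].
    intros t. simpl. rewrite weighted_orbit_lin; auto.
  - intros f Hf Hp. rewrite <- (Rmult_0_l (resolvent j m f)).
    apply (is_RInt_0_oo_le (fun t => 0 * weighted_orbit j m f t) (weighted_orbit j m f)).
    + apply is_RInt_0_oo_scal, resolvent_spec; auto.
    + apply resolvent_spec; auto.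
    + intros t _. rewrite Rmult_0_l. apply weighted_orbit_ge0; auto.
Qed.

Lemma resolvent_mass j m : 0 < r j -> IsMeasure d m -> mass (resolvent j m) = mass m * / (beta * r j).
Proof.
  intros Hr Hm. unfold mass. apply resolvent_eq.
  eapply is_RInt_0_oo_ext;
    [|apply (is_RInt_0_oo_scal (fun t => exp (- ((beta * r j) * t))) _ (m (fun _ => 1)));
    apply is_RInt_0_oo_exp; nra].
  intros t. simpl. unfold weighted_orbit. rewrite exp_beta_t_r.
  change (transl (rowvec theta j t) (fun _ => 1)) with (fun _ : vec => 1). ring.
Qed.

Lemma resolvent_upto_IsMeasure j t m : 0 <= t -> IsMeasure d m -> IsMeasure d (resolvent_upto j t m).
Proof.
  intros Ht Hm.
  assert (Hex : forall f, Cper d f -> ex_RInt (weighted_orbit j m f) 0 t).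
  { intros; apply ex_RInt_of_continuous; apply weighted_orbit_cont; auto. }
  apply IsMeasure_of_lin.
  - intros a b f g Hf Hg. unfold resolvent_upto. rewrite <- RInt_lincomb by auto.
    apply RInt_ext. intros; apply weighted_orbit_lin; auto.
  - intros f Hf Hp. apply RInt_ge_0; auto. intros; apply weighted_orbit_ge0; auto.
Qed.

Lemma weighted_orbit_transl j m f t u :
  weighted_orbit j m (transl (rowvec theta j t) f) u =
  exp (beta * t * r j) * weighted_orbit j m f (u + t).
Proof.
  unfold weighted_orbit. rewrite transl_transl, rowvec_add, Rplus_comm.
  replace (exp (- (beta * u * r j))) with (exp (beta * t * r j) * exp (- (beta * (t + u) * r j))).
  ring. rewrite <- exp_plus. f_equal. ring.
Qed.

Lemma Dop_at_resolvent j t m f : 0 < r j -> 0 <= t -> IsMeasure d m -> Cper d f ->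
  Dop_at j t (resolvent j m) f = resolvent_upto j t m f.
Proof.
  intros Hr Ht Hm Hf. rewrite Dop_at_weighted_orbit. unfold weighted_orbit at 1, resolvent_upto.
  assert (E : resolvent j m (transl (rowvec theta j t) f) =
              exp (beta * t * r j) * (resolvent j m f - RInt (weighted_orbit j m f) 0 t)).
  { apply resolvent_eq. eapply is_RInt_0_oo_ext; [| apply is_RInt_0_oo_scal, is_RInt_0_oo_shift; auto].
    - intros u. simpl. now rewrite weighted_orbit_transl.
    - apply weighted_orbit_cont; auto.
    - apply resolvent_spec; auto. }
  rewrite E, <- Rmult_assoc, <- exp_plus.
  replace (- (beta * t * r j) + beta * t * r j) with 0 by ring. rewrite exp_0. ring.
Qed.

Lemma is_RInt_0_oo_weighted_orbit_Dop j i s Y f : 0 < r j -> IsMeasure d Y -> Cper d f ->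
  is_RInt_0_oo (weighted_orbit j (Dop theta beta r i s Y) f) (Dop theta beta r i s (resolvent j Y) f).
Proof.
  intros Hr HY Hf. rewrite Dop_weighted_orbit. unfold weighted_orbit at 2.
  set (c := exp (- (beta * s i * r i))).
  replace (resolvent j Y f - c * resolvent j Y (transl (rowvec theta i (s i)) f)) with
    (1 * resolvent j Y f + (- c) * resolvent j Y (transl (rowvec theta i (s i)) f)) by ring.
  eapply is_RInt_0_oo_ext; [|apply (is_RInt_0_oo_lin _ _ _ _ 1 (- c)
    (resolvent_spec j Y f Hr HY Hf)
    (resolvent_spec j Y (transl (rowvec theta i (s i)) f) Hr HY (Cper_transl d _ f Hf)))].
  intros u. simpl. unfold weighted_orbit. rewrite Dop_weighted_orbit. unfold weighted_orbit.
  rewrite transl_comm. unfold c. ring.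
Qed.

Lemma resolvent_Dop_comm j i s Y f : 0 < r j -> IsMeasure d Y -> Cper d f ->
  resolvent j (Dop theta beta r i s Y) f = Dop theta beta r i s (resolvent j Y) f.
Proof. intros. now apply resolvent_eq, is_RInt_0_oo_weighted_orbit_Dop. Qed.

Lemma weighted_orbit_near j W f : 0 < r j -> IsMeasure d W -> Cper d f ->
  forall eta, 0 < eta -> exists delta, 0 < delta /\
    forall u, 0 <= u <= delta -> forall v, Rabs (weighted_orbit j W (transl v f) u - W (transl v f)) <= eta.
Proof.
  intros Hr HW Hf eta He. destruct (Cper_bounded d f Hf) as [C [HC0 HC]].
  set (M := mass W). assert (HM : 0 <= M) by (apply (mass_ge0 d); auto).
  destruct (meas_transl_rowvec_close d theta j f Hf (eta / 2 / (M + 1)))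
    as [eta1 [Heta1 Q]]. { apply Rdiv_lt_0_compat; lra. }
  set (K := beta * r j * C * M + 1).
  assert (HK : 0 < K) by (unfold K; assert (0 <= beta * r j * C * M) by (repeat apply Rmult_le_pos; lra); lra).
  exists (Rmin (eta1 / 2) (eta / (2 * K))). split. { apply Rmin_pos; apply Rdiv_lt_0_compat; lra. }
  intros u [Hu0 Hu1] v.
  assert (Hu2 : u < eta1) by (pose proof (Rmin_l (eta1 / 2) (eta / (2 * K))); lra).
  assert (Hu3 : u * K <= eta / 2).
  { pose proof (Rmin_r (eta1 / 2) (eta / (2 * K))).
    apply Rle_trans with (eta / (2 * K) * K); [apply Rmult_le_compat_r; lra | right; field; lra]. }
  unfold weighted_orbit. rewrite transl_transl.
  replace (W (transl v f)) with (W (transl (vadd (rowvec theta j 0) v) f)) by (now rewrite vadd_rowvec0).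
  set (A := W (transl (vadd (rowvec theta j u) v) f)). set (B := W (transl (vadd (rowvec theta j 0) v) f)).
  set (e := exp (- (beta * u * r j))).
  assert (HAB : Rabs (A - B) <= eta / 2).
  { eapply Rle_trans. apply Q; auto. rewrite Rminus_0_r, Rabs_right; lra.
    apply Rdiv_succ_mul_le; [lra | exact HM]. }
  assert (HB : Rabs B <= C * M).
  { unfold B. apply (meas_abs_le d); auto. apply Cper_transl; auto. intros; unfold transl; auto. }
  assert (He0 : 0 <= 1 - e <= beta * r j * u).
  { unfold e. replace (beta * r j * u) with (beta * u * r j) by ring.
    apply one_minus_exp_neg. apply Rmult_le_pos; [apply Rmult_le_pos|]; lra. }
  assert (Hepos : 0 < e) by apply exp_pos.
  replace (e * A - B) with (e * (A - B) - (1 - e) * B) by ring.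
  eapply Rle_trans. apply Rabs_triang.
  rewrite Rabs_Ropp, !Rabs_mult, (Rabs_right e), (Rabs_right (1 - e)) by lra.
  assert (e * Rabs (A - B) <= 1 * Rabs (A - B)) by (apply Rmult_le_compat_r; [apply Rabs_pos|lra]).
  assert ((1 - e) * Rabs B <= beta * r j * u * (C * M)) by (apply Rmult_le_compat; try lra; apply Rabs_pos).
  assert (0 <= beta * r j * C * M) by (repeat apply Rmult_le_pos; lra).
  assert (beta * r j * u * (C * M) <= u * K) by (unfold K; nra).
  lra.
Qed.

Lemma resolvent_upto_avg_close j W f : 0 < r j -> IsMeasure d W -> Cper d f ->
  forall eta, 0 < eta -> exists delta, 0 < delta /\
    forall t, 0 < t < delta -> forall v,
      Rabs (/ t * resolvent_upto j t W (transl v f) - W (transl v f)) <= eta.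
Proof.
  intros Hr HW Hf eta He. destruct (weighted_orbit_near j W f Hr HW Hf eta He) as [dl [Hdl P]].
  exists dl; split; auto. intros t Ht v. unfold resolvent_upto.
  rewrite <- (Rplus_0_l t) at 2. apply RInt_avg_close; try lra.
  - apply ex_RInt_of_continuous, weighted_orbit_cont; auto. apply Cper_transl; auto.
  - intros u Hu. apply P. lra.
Qed.

Lemma generator_eq j X f L : LimRight0 (fun t => / t * Dop_at j t X f) L -> generator j X f = L.
Proof.
  intros H. unfold generator. apply (LimRight0_unique (fun t => / t * Dop_at j t X f)); auto.
  apply epsilon_spec. eauto.
Qed.

Lemma generator_ext j X X' : MeasEq d X X' -> MeasEq d (generator j X) (generator j X').
Proof.
  intros H f Hf. unfold generator. f_equal. apply functional_extensionality; intro L.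
  f_equal. apply functional_extensionality; intro t. rewrite !Dop_at_weighted_orbit.
  unfold weighted_orbit. rewrite !H; auto. apply Cper_transl; auto.
Qed.

Lemma generator_resolvent j W f : 0 < r j -> IsMeasure d W -> Cper d f ->
  generator j (resolvent j W) f = W f.
Proof.
  intros Hr HW Hf. apply generator_eq. intros eps He.
  destruct (resolvent_upto_avg_close j W f Hr HW Hf (eps / 2) ltac:(lra)) as [dl [Hdl P]].
  exists dl; split; auto. intros t Ht. rewrite Dop_at_resolvent by (auto; lra).
  specialize (P t Ht (fun _ => 0)). rewrite transl0 in P. lra.
Qed.

(* Same computation one level deeper, with the error integrated against [e^{-beta r_i u}]. *)
Lemma generator_resolvent_resolvent j i W f : 0 < r j -> 0 < r i -> IsMeasure d W -> Cper d f ->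
  generator j (resolvent i (resolvent j W)) f = resolvent i W f.
Proof.
  intros Hrj Hri HW Hf. apply generator_eq. intros eps He.
  assert (HZ : IsMeasure d (resolvent j W)) by (apply resolvent_IsMeasure; auto).
  assert (Hbr : 0 < beta * r i) by (apply Rmult_lt_0_compat; lra).
  set (eta := eps * (beta * r i) / 2).
  assert (Heta : 0 < eta) by (unfold eta; apply Rdiv_lt_0_compat; [apply Rmult_lt_0_compat|]; lra).
  destruct (resolvent_upto_avg_close j W f Hrj HW Hf eta Heta) as [dl [Hdl P]].
  exists dl; split; auto. intros t Ht.
  assert (I1 := is_RInt_0_oo_weighted_orbit_Dop i j (fun _ => t) _ f Hri HZ Hf).
  fold (Dop_at j t (resolvent i (resolvent j W))) (Dop_at j t (resolvent j W)) in I1.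
  assert (I3 := is_RInt_0_oo_lin _ _ _ _ (/ t) (-1) I1 (resolvent_spec i W f Hri HW Hf)).
  assert (I4 := is_RInt_0_oo_scal _ _ eta (is_RInt_0_oo_exp (beta * r i) Hbr)).
  replace (/ t * Dop_at j t (resolvent i (resolvent j W)) f - resolvent i W f)
    with (/ t * Dop_at j t (resolvent i (resolvent j W)) f + -1 * resolvent i W f) by ring.
  eapply Rle_lt_trans. apply (is_RInt_0_oo_abs_le _ _ _ _ I3 I4).
  - intros u Hu. unfold weighted_orbit.
    rewrite (Dop_at_resolvent j t W) by (auto; try lra; apply Cper_transl; auto).
    rewrite <- exp_beta_t_r.
    set (g := transl (rowvec theta i u) f).
    replace (/ t * (exp (- (beta * u * r i)) * resolvent_upto j t W g) +
      -1 * (exp (- (beta * u * r i)) * W g)) with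
      (exp (- (beta * u * r i)) * (/ t * resolvent_upto j t W g - W g)) by ring.
    rewrite Rabs_mult, Rabs_right by (apply Rle_ge; left; apply exp_pos).
    rewrite Rmult_comm. apply Rmult_le_compat_r. left; apply exp_pos. apply P; auto.
  - unfold eta. replace (eps * (beta * r i) / 2 * / (beta * r i)) with (eps / 2) by (field; lra). lra.
Qed.

End Resolvent.

Lemma RInt_derivable_pt_lim (h : R -> R) u : (forall t, continuous h t) ->
  derivable_pt_lim (fun v => RInt h 0 v) u (h u).
Proof.
  intros Hc. apply is_derive_Reals.
  apply (is_derive_RInt (V:=R_CompleteNormedModule) h (fun v => RInt h 0 v) 0 u); auto.
  apply filter_forall. intros b. apply (RInt_correct (V:=R_CompleteNormedModule)).
  apply ex_RInt_of_continuous; auto.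
Qed.

Lemma derivable_pt_lim_continuous (F : R -> R) u l : derivable_pt_lim F u l -> continuous F u.
Proof.
  intros H. apply (ex_derive_continuous (K:=R_AbsRing) (V:=R_NormedModule)).
  exists l. now apply is_derive_Reals.
Qed.

Lemma derivable_pt_lim_right (F : R -> R) u l : derivable_pt_lim F u l ->
  LimRight0 (fun t => (F (u + t) - F u) / t) l.
Proof.
  intros H eps He. destruct (H eps He) as [dl Hdl]. exists dl. split. apply cond_pos.
  intros t Ht. apply Hdl. lra. rewrite Rabs_right; lra.
Qed.

Lemma one_minus_exp_quot_lim c : LimRight0 (fun t => (1 - exp (- (c * t))) / t) c.
Proof.
  assert (H : derivable_pt_lim (fun t => exp (- (c * t))) 0 (- c)).
  { apply is_derive_Reals. auto_derive; auto. rewrite Rmult_0_r, Ropp_0, exp_0. ring. }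
  assert (L := LimRight0_scal _ _ (-1) (derivable_pt_lim_right _ _ _ H)).
  replace (-1 * - c) with c in L by ring.
  eapply LimRight0_ext; [|exact L]. intros t Ht. simpl.
  rewrite Rplus_0_l, Rmult_0_r, Ropp_0, exp_0. field. lra.
Qed.

Lemma ex_LimRight0_meas_approx d (M : R -> meas) K f :
  (forall t, 0 < t -> IsMeasure d (M t)) -> (forall t, 0 < t -> mass (M t) <= K) -> Cper d f ->
  (forall eta, 0 < eta -> exists g L, Cper d g /\ (forall x, Rabs (f x - g x) <= eta) /\
     LimRight0 (fun t => M t g) L) ->
  exists L, LimRight0 (fun t => M t f) L.
Proof.
  intros HM HK Hf Happ. apply LimRight0_cauchy. intros eps Heps.
  assert (HK0 : 0 <= K).
  { apply Rle_trans with (mass (M 1)); [apply (mass_ge0 d), HM | apply HK]; lra. }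
  set (eta := eps / 4 / (K + 1)). assert (Heta : 0 < eta) by (unfold eta; apply Rdiv_lt_0_compat; lra).
  destruct (Happ eta Heta) as [g [L [Hg [Hfg HL]]]].
  destruct (HL (eps / 4) ltac:(lra)) as [dl [Hdl P]]. exists dl; split; auto.
  assert (B : forall u, 0 < u -> Rabs (M u f - M u g) <= eps / 4).
  { intros u Hu. rewrite <- (meas_minus d (M u)) by auto.
    eapply Rle_trans. apply (meas_abs_le d); auto. apply Cper_minus; auto.
    apply Rle_trans with (eta * K). apply Rmult_le_compat_l; auto; lra.
    apply Rdiv_succ_mul_le; lra. }
  intros s t Hs Ht.
  pose proof (B s ltac:(lra)). pose proof (B t ltac:(lra)). pose proof (P s Hs). pose proof (P t Ht).
  apply Rabs_le_between in H. apply Rabs_le_between in H0.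
  apply Rabs_def2 in H1. apply Rabs_def2 in H2. apply Rabs_def1; lra.
Qed.

Section OneDirection.
Variable d : nat.
Variable theta : nat -> nat -> R.
Variable beta : R.
Variable r : nat -> R.
Hypothesis Hbeta : 0 < beta.
Variable j : nat.
Hypothesis Hr : 0 < r j.

Definition ray (f : vec -> R) (x : vec) (u : R) : R := f (vadd x (rowvec theta j u)).
Definition ray_avg (e : R) (f : vec -> R) : vec -> R := fun x => / e * RInt (ray f x) 0 e.

Lemma ray_unif_cont f : Cper d f -> forall eta, 0 < eta -> exists delta, 0 < delta /\
  forall x u v, Rabs (u - v) < delta -> Rabs (ray f x u - ray f x v) < eta.
Proof.
  intros Hf eta He. destruct (transl_unif_cont d f Hf eta He) as [d1 [Hd1 P]].
  destruct (rowvec_close d theta j d1 Hd1) as [d2 [Hd2 Q]]. exists d2; split; auto.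
  intros x u v Huv. apply (P (rowvec theta j u) (rowvec theta j v)). intros; apply Q; auto.
Qed.

Lemma ray_cont f x : Cper d f -> forall t, continuous (ray f x) t.
Proof.
  intros Hf t. apply continuous_eps_delta. intros eps He.
  destruct (ray_unif_cont f Hf eps He) as [dl [Hd P]]. exists dl; split; auto.
Qed.

Lemma ex_RInt_ray f x a b : Cper d f -> ex_RInt (ray f x) a b.
Proof. intros; apply ex_RInt_of_continuous; apply ray_cont; auto. Qed.

Lemma ray_avg_piece f : Cper d f -> forall eta, 0 < eta -> exists delta, 0 < delta /\
  forall x a t, 0 < t < delta -> Rabs (/ t * RInt (ray f x) a (a + t) - ray f x a) <= eta.
Proof.
  intros Hf eta He. destruct (ray_unif_cont f Hf eta He) as [dl [Hd P]]. exists dl; split; auto.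
  intros x a t Ht. apply RInt_avg_close; try lra. apply ex_RInt_ray; auto.
  intros u Hu. left. apply P. rewrite Rabs_right; lra.
Qed.

Lemma ray_avg_Cper e f : 0 < e -> Cper d f -> Cper d (ray_avg e f).
Proof.
  intros He Hf. pose proof Hf as [F1 [F2 F3]]. unfold ray_avg. split; [|split].
  - intros x y Hxy. f_equal. apply RInt_ext. intros u _. unfold ray. apply F1.
    intros i Hi. unfold vadd. rewrite Hxy; auto.
  - intros x i Hi. f_equal. apply RInt_ext. intros u _. unfold ray. rewrite vadd_upd. apply F2; auto.
  - intros x eps Heps. destruct (Cper_unif_cont d f Hf (eps / 2) ltac:(lra)) as [dl [Hdl P]].
    exists dl; split; auto. intros y Hy.
    rewrite <- Rmult_minus_distr_l.
    assert (E : @eq R (RInt (fun u => 1 * ray f y u + (-1) * ray f x u) 0 e)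
                (RInt (ray f y) 0 e - RInt (ray f x) 0 e))
      by (rewrite RInt_lincomb by (apply ex_RInt_ray; auto); ring).
    rewrite <- E.
    apply Rle_lt_trans with (eps / 2); [|lra].
    assert (A := RInt_avg_close (fun u => 1 * ray f y u + (-1) * ray f x u) 0 e 0 (eps / 2) He).
    rewrite Rplus_0_l, Rminus_0_r in A. apply A.
    + apply ex_RInt_lincomb; apply ex_RInt_ray; auto.
    + intros u Hu. rewrite Rminus_0_r. left.
      replace (1 * ray f y u + -1 * ray f x u) with (ray f y u - ray f x u) by ring.
      unfold ray. apply P. intros i Hi. unfold vadd.
      replace (y i + rowvec theta j u i - (x i + rowvec theta j u i)) with (y i - x i) by ring. auto.
Qed.

Lemma ray0 f x : ray f x 0 = f x.
Proof. unfold ray. now rewrite vadd_comm, vadd_rowvec0. Qed.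

Lemma ray_avg_close f : Cper d f -> forall eta, 0 < eta -> exists e0, 0 < e0 /\
  forall e, 0 < e < e0 -> forall x, Rabs (f x - ray_avg e f x) <= eta.
Proof.
  intros Hf eta He. destruct (ray_avg_piece f Hf eta He) as [dl [Hd P]]. exists dl; split; auto.
  intros e Hee x. specialize (P x 0 e Hee). rewrite Rplus_0_l, ray0 in P.
  now rewrite <- Rabs_Ropp, Ropp_minus_distr.
Qed.

Lemma ray_avg_bound e f C : 0 < e -> Cper d f -> (forall x, Rabs (f x) <= C) ->
  forall x, Rabs (ray_avg e f x) <= C.
Proof.
  intros He Hf HC x. unfold ray_avg.
  assert (A := RInt_avg_close (ray f x) 0 e 0 C He). rewrite Rplus_0_l, Rminus_0_r in A.
  apply A. apply ex_RInt_ray; auto. intros u _. rewrite Rminus_0_r. apply HC.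
Qed.

Lemma ray_shift f x t u : ray f (vadd x (rowvec theta j t)) u = ray f x (u + t).
Proof. unfold ray. rewrite vadd_assoc, rowvec_add. do 3 f_equal. ring. Qed.

Lemma ray_avg_shift e f x t : Cper d f ->
  ray_avg e f (vadd x (rowvec theta j t)) = / e * RInt (ray f x) t (e + t).
Proof.
  intros Hf. unfold ray_avg. f_equal.
  rewrite (RInt_ext _ (fun u => ray f x (u + t))) by (intros; apply ray_shift).
  rewrite RInt_shift. f_equal; ring. apply ray_cont; auto.
Qed.

(* The value at [ray_avg e f] of the generator [G_j], computed in closed form. *)
Definition ray_avg_gen (e : R) (f : vec -> R) : vec -> R :=
  fun x => beta * r j * ray_avg e f x + / e * (f x - f (vadd x (rowvec theta j e))).

Lemma ray_avg_gen_Cper e f : 0 < e -> Cper d f -> Cper d (ray_avg_gen e f).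
Proof.
  intros He Hf. apply Cper_lin. apply ray_avg_Cper; auto.
  apply Cper_minus; auto. apply (Cper_transl d (rowvec theta j e) f Hf).
Qed.

Lemma ray_avg_shift_close e f C t x : 0 < e -> 0 <= t -> Cper d f -> (forall x, Rabs (f x) <= C) ->
  Rabs (ray_avg e f (vadd x (rowvec theta j t)) - ray_avg e f x) <= 2 * t * C / e.
Proof.
  intros He Ht Hf HC. rewrite ray_avg_shift by auto. unfold ray_avg.
  assert (Hex : forall a b, ex_RInt (ray f x) a b) by (intros; apply ex_RInt_ray; auto).
  assert (Q : forall a, Rabs (RInt (ray f x) a (a + t)) <= t * C).
  { intros a. replace (t * C) with ((a + t - a) * C) by ring.
    apply abs_RInt_le_const; auto. lra. intros; apply HC. }
  replace (/ e * RInt (ray f x) t (e + t) - / e * RInt (ray f x) 0 e) with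
    (/ e * (RInt (ray f x) e (e + t) - RInt (ray f x) 0 (0 + t))).
  2:{ rewrite Rplus_0_l, <- (RInt_Chasles_R _ 0 t e), <- (RInt_Chasles_R _ t e (e + t)) by auto. ring. }
  rewrite Rabs_mult, Rabs_right by (apply Rle_ge; left; apply Rinv_0_lt_compat; lra).
  apply Rle_trans with (/ e * (t * C + t * C)); [|right; field; lra].
  apply Rmult_le_compat_l. left; apply Rinv_0_lt_compat; lra.
  eapply Rle_trans; [apply Rabs_triang|]. rewrite Rabs_Ropp. pose proof (Q e); pose proof (Q 0). lra.
Qed.

Lemma ray_avg_diff_quot e f : 0 < e -> Cper d f -> forall eta, 0 < eta -> exists delta, 0 < delta /\
  forall t, 0 < t < delta -> forall x,
    Rabs (/ t * (ray_avg e f x - ray_avg e f (vadd x (rowvec theta j t))) -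
          / e * (f x - f (vadd x (rowvec theta j e)))) <= eta.
Proof.
  intros He Hf eta Heta.
  destruct (ray_avg_piece f Hf (eta * e / 2)) as [dl [Hdl P]]. { apply Rdiv_lt_0_compat; nra. }
  exists dl; split; auto. intros t Ht x.
  assert (Hex : forall a b, ex_RInt (ray f x) a b) by (intros; apply ex_RInt_ray; auto).
  rewrite ray_avg_shift by auto. unfold ray_avg.
  pose proof (P x 0 t Ht) as P0. pose proof (P x e t Ht) as Pe.
  rewrite Rplus_0_l, ray0 in P0. unfold ray at 2 in Pe.
  replace (/ t * (/ e * RInt (ray f x) 0 e - / e * RInt (ray f x) t (e + t)) -
           / e * (f x - f (vadd x (rowvec theta j e)))) with
    (/ e * ((/ t * RInt (ray f x) 0 t - f x) -
            (/ t * RInt (ray f x) e (e + t) - f (vadd x (rowvec theta j e))))).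
  2:{ rewrite <- (RInt_Chasles_R _ 0 t e), <- (RInt_Chasles_R _ t e (e + t)) by auto. field; lra. }
  rewrite Rabs_mult, Rabs_right by (apply Rle_ge; left; apply Rinv_0_lt_compat; lra).
  apply Rle_trans with (/ e * (eta * e / 2 + eta * e / 2)); [|right; field; lra].
  apply Rmult_le_compat_l. left; apply Rinv_0_lt_compat; lra.
  eapply Rle_trans; [apply Rabs_triang|]. rewrite Rabs_Ropp. lra.
Qed.

Lemma ray_avg_gen_unif e f : 0 < e -> Cper d f -> forall eta, 0 < eta -> exists delta, 0 < delta /\
  forall t, 0 < t < delta -> forall x,
    Rabs (/ t * (ray_avg e f x - exp (- (beta * t * r j)) * ray_avg e f (vadd x (rowvec theta j t)))
          - ray_avg_gen e f x) <= eta.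
Proof.
  intros He Hf eta Heta. destruct (Cper_bounded d f Hf) as [C [HC0 HC]].
  set (c := beta * r j). assert (Hc : 0 < c) by (unfold c; apply Rmult_lt_0_compat; lra).
  destruct (ray_avg_diff_quot e f He Hf (eta / 3) ltac:(lra)) as [d1 [Hd1 P1]].
  destruct (one_minus_exp_quot_lim c (eta / 3 / (C + 1)) ltac:(apply Rdiv_lt_0_compat; lra))
    as [d2 [Hd2 P2]].
  set (d3 := eta * e / (6 * (c * C + 1))).
  assert (Hd3 : 0 < d3) by (unfold d3; apply Rdiv_lt_0_compat; nra).
  exists (Rmin d1 (Rmin d2 d3)). split. { apply Rmin_pos; auto. apply Rmin_pos; auto. }
  intros t Ht x.
  pose proof (Rmin_l d1 (Rmin d2 d3)); pose proof (Rmin_r d1 (Rmin d2 d3)).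
  pose proof (Rmin_l d2 d3); pose proof (Rmin_r d2 d3).
  set (g := ray_avg e f). set (y := vadd x (rowvec theta j t)).
  assert (A1 := P1 t ltac:(lra) x). fold g y in A1.
  assert (A2 : Rabs (((1 - exp (- (c * t))) / t - c) * g y) <= eta / 3).
  { rewrite Rabs_mult. apply Rle_trans with (eta / 3 / (C + 1) * C).
    apply Rmult_le_compat; try apply Rabs_pos. left; apply P2; lra. apply ray_avg_bound; auto.
    apply Rdiv_succ_mul_le; lra. }
  assert (A3 : Rabs (c * (g y - g x)) <= eta / 3).
  { rewrite Rabs_mult, Rabs_right by lra.
    apply Rle_trans with (c * (2 * t * C / e)).
    apply Rmult_le_compat_l; [lra | apply ray_avg_shift_close; auto; lra].
    assert (t * (6 * (c * C + 1)) <= eta * e).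
    { apply Rle_trans with (d3 * (6 * (c * C + 1))). apply Rmult_le_compat_r; nra.
      right; unfold d3; field; nra. }
    apply (Rmult_le_reg_r e). lra. replace (c * (2 * t * C / e) * e) with (2 * c * C * t) by (field; lra).
    nra. }
  unfold ray_avg_gen. fold c g. rewrite exp_beta_t_r. fold c y.
  replace (/ t * (g x - exp (- (c * t)) * g y) - (c * g x + / e * (f x - f (vadd x (rowvec theta j e)))))
    with ((/ t * (g x - g y) - / e * (f x - f (vadd x (rowvec theta j e))))
          + ((1 - exp (- (c * t))) / t - c) * g y + c * (g y - g x)) by (field; lra).
  eapply Rle_trans. apply Rabs_triang. eapply Rle_trans. apply Rplus_le_compat_r. apply Rabs_triang.
  lra.
Qed.

Definition diff_quot (t : R) (X : meas) : meas := fun h => / t * Dop_at theta beta r j t X h.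

Definition dir_subinvariant (X : meas) :=
  IsMeasure d X /\ forall t, 0 <= t -> PosFun d (Dop_at theta beta r j t X).

Lemma diff_quot_IsMeasure X t : dir_subinvariant X -> 0 < t -> IsMeasure d (diff_quot t X).
Proof.
  intros [HX HP] Ht. apply IsMeasure_of_lin.
  - intros a b f g Hf Hg. unfold diff_quot. rewrite !Dop_at_weighted_orbit.
    rewrite (weighted_orbit_lin d theta beta r j X a b f g HX Hf Hg), (meas_lin d X HX); auto. ring.
  - intros f Hf Hp. apply Rmult_le_pos. left; apply Rinv_0_lt_compat; auto. apply HP; auto. lra.
Qed.

Lemma diff_quot_mass X t : mass (diff_quot t X) = (1 - exp (- (beta * r j * t))) / t * mass X.
Proof.
  unfold diff_quot, mass. rewrite Dop_at_weighted_orbit. unfold weighted_orbit. rewrite exp_beta_t_r.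
  change (transl (rowvec theta j t) (fun _ : vec => 1)) with (fun _ : vec => 1). unfold Rdiv. ring.
Qed.

Lemma diff_quot_mass_le X t : IsMeasure d X -> 0 < t -> mass (diff_quot t X) <= beta * r j * mass X.
Proof.
  intros HX Ht. rewrite diff_quot_mass. apply Rmult_le_compat_r. apply (mass_ge0 d); auto.
  pose proof (one_minus_exp_neg (beta * r j * t) ltac:(apply Rmult_le_pos; [apply Rmult_le_pos|]; lra)).
  apply (Rmult_le_reg_r t); auto. unfold Rdiv. rewrite Rmult_assoc, Rinv_l by lra. lra.
Qed.

Lemma diff_quot_avg X e f : IsMeasure d X -> 0 < e -> Cper d f ->
  LimRight0 (fun t => diff_quot t X (ray_avg e f)) (X (ray_avg_gen e f)).
Proof.
  intros HX He Hf eps Heps. set (M := mass X). assert (HM : 0 <= M) by (apply (mass_ge0 d); auto).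
  destruct (ray_avg_gen_unif e f He Hf (eps / 2 / (M + 1))) as [dl [Hdl P]].
  { apply Rdiv_lt_0_compat; lra. }
  exists dl; split; auto.
  intros t Ht. set (g := ray_avg e f). assert (Hg : Cper d g) by (apply ray_avg_Cper; auto).
  set (ct := exp (- (beta * t * r j))).
  assert (E : diff_quot t X g = X (fun x => / t * g x + (- (/ t * ct)) * transl (rowvec theta j t) g x)).
  { rewrite (meas_lin d X HX); auto. unfold diff_quot. rewrite Dop_at_weighted_orbit.
    unfold weighted_orbit. fold ct. ring. apply Cper_transl; auto. }
  rewrite E, <- (meas_minus d X HX).
  2:{ apply Cper_lin; auto. apply Cper_transl; auto. }
  2:{ apply ray_avg_gen_Cper; auto. }
  apply Rle_lt_trans with (eps / 2 / (M + 1) * M).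
  - apply (meas_abs_le d); auto.
    { apply Cper_minus. apply Cper_lin; auto. apply Cper_transl; auto. apply ray_avg_gen_Cper; auto. }
    intros x. specialize (P t Ht x). unfold transl. fold ct g in P.
    replace (/ t * g x + - (/ t * ct) * g (vadd x (rowvec theta j t)) - ray_avg_gen e f x) with
      (/ t * (g x - ct * g (vadd x (rowvec theta j t))) - ray_avg_gen e f x) by ring. auto.
  - pose proof (Rdiv_succ_mul_le (eps / 2) M ltac:(lra) HM). lra.
Qed.

Lemma generator_spec X f : dir_subinvariant X -> Cper d f ->
  LimRight0 (fun t => diff_quot t X f) (generator theta beta r j X f).
Proof.
  intros HJ Hf. pose proof HJ as [HX _].
  assert (Hex : exists L, LimRight0 (fun t => diff_quot t X f) L).
  { apply (ex_LimRight0_meas_approx d (fun t => diff_quot t X) (beta * r j * mass X)); auto.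
    - intros; apply diff_quot_IsMeasure; auto.
    - intros; apply diff_quot_mass_le; auto.
    - intros eta Heta. destruct (ray_avg_close f Hf eta Heta) as [e0 [He0 Pe]].
      exists (ray_avg (e0 / 2) f), (X (ray_avg_gen (e0 / 2) f)). split; [|split].
      + apply ray_avg_Cper; auto; lra.
      + apply Pe; lra.
      + apply diff_quot_avg; auto; lra. }
  unfold generator. apply epsilon_spec. exact Hex.
Qed.

Lemma generator_IsMeasure X : dir_subinvariant X -> IsMeasure d (generator theta beta r j X).
Proof.
  intros HJ. apply IsMeasure_of_lin.
  - intros a b f g Hf Hg. apply (LimRight0_unique (fun t => diff_quot t X (fun x => a * f x + b * g x))).
    + apply generator_spec; auto. apply Cper_lin; auto.
    + eapply LimRight0_ext; [|apply LimRight0_lin; apply generator_spec; eauto].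
      intros t Ht. simpl. rewrite (meas_lin d (diff_quot t X)); auto. apply diff_quot_IsMeasure; auto.
  - intros f Hf Hp. apply (LimRight0_ge0 (fun t => diff_quot t X f)). apply generator_spec; auto.
    intros t Ht. apply (meas_ge0 d); auto. apply diff_quot_IsMeasure; auto.
Qed.

Lemma generator_mass X : dir_subinvariant X -> mass (generator theta beta r j X) = beta * r j * mass X.
Proof.
  intros HJ. apply (LimRight0_unique (fun t => diff_quot t X (fun _ => 1))).
  - apply generator_spec; auto. apply Cper_const.
  - rewrite Rmult_comm. eapply LimRight0_ext; [|apply LimRight0_scal, one_minus_exp_quot_lim].
    intros t Ht. simpl. fold (mass (diff_quot t X)). rewrite diff_quot_mass. ring.
Qed.

Lemma generator_avg X e f : dir_subinvariant X -> 0 < e -> Cper d f ->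
  generator theta beta r j X (ray_avg e f) = X (ray_avg_gen e f).
Proof.
  intros HJ He Hf. apply (LimRight0_unique (fun t => diff_quot t X (ray_avg e f))).
  apply generator_spec; auto. apply ray_avg_Cper; auto. apply diff_quot_avg; auto. apply HJ.
Qed.

Lemma weighted_orbit_right_deriv X f u : dir_subinvariant X -> Cper d f ->
  LimRight0 (fun t => (weighted_orbit theta beta r j X f (u + t) - weighted_orbit theta beta r j X f u) / t)
    (- weighted_orbit theta beta r j (generator theta beta r j X) f u).
Proof.
  intros HJ Hf. unfold weighted_orbit at 3.
  replace (- (exp (- (beta * u * r j)) * generator theta beta r j X (transl (rowvec theta j u) f)))
    with ((- exp (- (beta * u * r j))) * generator theta beta r j X (transl (rowvec theta j u) f))
    by ring.
  eapply LimRight0_ext;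
    [|apply LimRight0_scal, (generator_spec X (transl (rowvec theta j u) f) HJ (Cper_transl d _ f Hf))].
  intros t Ht. simpl. unfold diff_quot. rewrite Dop_at_weighted_orbit. unfold weighted_orbit.
  rewrite transl_transl, rowvec_add.
  replace (exp (- (beta * (u + t) * r j))) with (exp (- (beta * u * r j)) * exp (- (beta * t * r j)))
    by (rewrite <- exp_plus; f_equal; ring).
  replace (t + u) with (u + t) by ring. field. lra.
Qed.

(* As a function of [T], the left-hand side is continuous with right derivative 0. *)
Lemma weighted_orbit_generator_integral X f T : dir_subinvariant X -> Cper d f -> 0 <= T ->
  weighted_orbit theta beta r j X f T + RInt (weighted_orbit theta beta r j (generator theta beta r j X) f) 0 T
  = X f.
Proof.
  intros HJ Hf HT. pose proof HJ as [HX _].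
  set (Y := generator theta beta r j X). assert (HY : IsMeasure d Y) by (apply generator_IsMeasure; auto).
  assert (Hcy : forall t, continuous (weighted_orbit theta beta r j Y f) t)
    by (apply (weighted_orbit_cont d); auto).
  set (Phi := fun u => weighted_orbit theta beta r j X f u + RInt (weighted_orbit theta beta r j Y f) 0 u).
  change (Phi T = X f).
  replace (X f) with (Phi 0).
  2:{ unfold Phi, weighted_orbit. rewrite RInt_point, transl_rowvec0.
      rewrite Rmult_0_r, Rmult_0_l, Ropp_0, exp_0. unfold zero; simpl. ring. }
  apply right_deriv0_const; auto.
  - intros u _. apply (continuous_plus (weighted_orbit theta beta r j X f)).
    + apply (weighted_orbit_cont d); auto.
    + eapply derivable_pt_lim_continuous, RInt_derivable_pt_lim; auto.
  - intros u _. replace 0 with (1 * (- weighted_orbit theta beta r j Y f u) +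
                                1 * weighted_orbit theta beta r j Y f u) by ring.
    eapply LimRight0_ext; [|apply LimRight0_lin;
      [apply weighted_orbit_right_deriv; auto
      |apply derivable_pt_lim_right, RInt_derivable_pt_lim; auto]].
    intros t Ht. unfold Phi. simpl. field. lra.
Qed.

Lemma resolvent_generator X f : dir_subinvariant X -> Cper d f ->
  resolvent theta beta r j (generator theta beta r j X) f = X f.
Proof.
  intros HJ Hf. pose proof HJ as [HX _].
  apply resolvent_eq. split.
  - intros T _. apply ex_RInt_of_continuous, (weighted_orbit_cont d); auto. apply generator_IsMeasure; auto.
  - intros eps He. destruct (Cper_bounded d f Hf) as [C [HC0 HC]].
    assert (Hbr : 0 < beta * r j) by (apply Rmult_lt_0_compat; lra).
    destruct (exp_tail (C * mass X) (beta * r j)) with eps as [M [HM P]]; auto.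
    { apply Rmult_le_pos; auto; apply (mass_ge0 d); auto. }
    exists M; split; auto. intros T HT.
    rewrite <- (weighted_orbit_generator_integral X f T) by (auto; lra).
    replace (RInt _ 0 T - _) with (- weighted_orbit theta beta r j X f T) by ring.
    rewrite Rabs_Ropp. eapply Rle_lt_trans. apply (weighted_orbit_bound d); auto. apply P; auto.
Qed.

End OneDirection.

(** * Several directions *)

Definition lsum (l : list nat) (g : nat -> R) : R := fold_right (fun j acc => g j + acc) 0 l.
Definition lprod (l : list nat) (g : nat -> R) : R := fold_right (fun j acc => g j * acc) 1 l.

Lemma lsum_app l1 l2 g : lsum (l1 ++ l2) g = lsum l1 g + lsum l2 g.
Proof. induction l1; simpl; [ring|]. rewrite IHl1; ring. Qed.

Lemma lprod_app l1 l2 g : lprod (l1 ++ l2) g = lprod l1 g * lprod l2 g.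
Proof. induction l1; simpl; [ring|]. rewrite IHl1; ring. Qed.

Lemma sumR_lsum k g : sumR k g = lsum (seq 0 k) g.
Proof.
  induction k; auto. change (sumR (S k) g) with (sumR k g + g k).
  rewrite seq_S, lsum_app, IHk. simpl. ring.
Qed.

Lemma prodR_lprod k g : prodR k g = lprod (seq 0 k) g.
Proof.
  induction k; auto. change (prodR (S k) g) with (prodR k g * g k).
  rewrite seq_S, lprod_app, IHk. simpl. ring.
Qed.

Lemma lsum_ext l g g' : (forall j, In j l -> g j = g' j) -> lsum l g = lsum l g'.
Proof. induction l; simpl; intros; auto. rewrite H, IHl; auto. Qed.

Lemma lprod_ext l g g' : (forall j, In j l -> g j = g' j) -> lprod l g = lprod l g'.
Proof. induction l; simpl; intros; auto. rewrite H, IHl; auto. Qed.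

Lemma upd_notin_eq (l : list nat) j s t i : ~ In j l -> In i l -> upd s j t i = s i.
Proof. intros Hj Hi. apply upd_neq. intros ->. contradiction. Qed.

Lemma MeasEq_sym d m1 m2 : MeasEq d m1 m2 -> MeasEq d m2 m1.
Proof. intros H f Hf; symmetry; auto. Qed.

Lemma MeasEq_trans d m1 m2 m3 : MeasEq d m1 m2 -> MeasEq d m2 m3 -> MeasEq d m1 m3.
Proof. intros H1 H2 f Hf; rewrite H1; auto. Qed.

Section Products.
Variable d : nat.
Variable theta : nat -> nat -> R.
Variable beta : R.
Variable r : nat -> R.
Hypothesis Hbeta : 0 < beta.

Local Notation Res := (resolvent theta beta r).
Local Notation Gen := (generator theta beta r).
Local Notation D := (Dop theta beta r).

Definition Pop_list (l : list nat) (s : vec) (X : meas) : meas := fold_right (fun j m => D j s m) X l.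

(* For [l = seq 0 k] these are the maps [mu |-> nu_mu] and [nu |-> mu_nu] of the theorem. *)
Definition resolvent_comp (l : list nat) (m : meas) : meas := fold_left (fun m j => Res j m) l m.
Definition generator_comp (l : list nat) (m : meas) : meas := fold_left (fun m j => Gen j m) l m.

Definition Subinvariant_list (l : list nat) (X : meas) : Prop :=
  IsMeasure d X /\ forall s : vec, (forall j, In j l -> 0 <= s j) -> PosFun d (Pop_list l s X).

Definition rpos (l : list nat) := forall i, In i l -> 0 < r i.

Lemma rpos_cons j l : rpos (j :: l) -> 0 < r j /\ rpos l.
Proof. intros H. split. apply H; simpl; auto. intros i Hi; apply H; simpl; auto. Qed.

Lemma Dop_comm i j s m : D i s (D j s m) = D j s (D i s m).
Proof.
  apply functional_extensionality; intro f. unfold Dop, pushR.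
  rewrite (meas_ext m (fun x => f (vadd (vadd x (rowvec theta i (s i))) (rowvec theta j (s j))))
     (fun x => f (vadd (vadd x (rowvec theta j (s j))) (rowvec theta i (s i)))))
    by (intros; now rewrite vadd_AC).
  ring.
Qed.

Lemma Dop_Pop_list i l s X : D i s (Pop_list l s X) = Pop_list l s (D i s X).
Proof. induction l; simpl; auto. now rewrite Dop_comm, IHl. Qed.

Lemma Pop_list_s l s s' X : (forall i, In i l -> s i = s' i) -> Pop_list l s X = Pop_list l s' X.
Proof. induction l; simpl; intros H; auto. rewrite IHl by auto. apply Dop_ext_s. auto. Qed.

Lemma Pop_list_Dop_at j l s t X : ~ In j l ->
  Pop_list l s (Dop_at theta beta r j t X) = Pop_list (j :: l) (upd s j t) X.
Proof.
  intros Hj. simpl. rewrite Dop_Pop_list, (Pop_list_s l (upd s j t) s).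
  - f_equal. apply Dop_ext_s. now rewrite upd_eq.
  - intros i Hi. now apply (upd_notin_eq l).
Qed.

Lemma upd_nonneg j l s t : ~ In j l -> 0 <= t -> (forall i, In i l -> 0 <= s i) ->
  forall i, In i (j :: l) -> 0 <= upd s j t i.
Proof.
  intros Hj Ht Hs i [<-|Hi]; [now rewrite upd_eq|]. rewrite (upd_notin_eq l); auto.
Qed.

Lemma Pop_list_scal l s c X : Pop_list l s (fun h => c * X h) = fun h => c * Pop_list l s X h.
Proof.
  induction l; simpl; auto. rewrite IHl. apply functional_extensionality; intro f.
  unfold Dop, pushR. ring.
Qed.

Lemma Pop_list_ext l s X X' : MeasEq d X X' -> MeasEq d (Pop_list l s X) (Pop_list l s X').
Proof.
  induction l; simpl; intros H f Hf; auto. unfold Dop, pushR. rewrite !IHl; auto.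
  apply (Cper_transl d _ f Hf).
Qed.

Lemma Pop_list_lim l s (M : R -> meas) Y :
  (forall h, Cper d h -> LimRight0 (fun t => M t h) (Y h)) ->
  forall h, Cper d h -> LimRight0 (fun t => Pop_list l s (M t) h) (Pop_list l s Y h).
Proof.
  induction l as [|i l IH]; simpl; intros H h Hh; auto. unfold Dop, pushR.
  set (c := exp (- (beta * s i * r i))).
  assert (H3 := LimRight0_lin _ _ _ _ 1 (- c) (IH H h Hh)
                  (IH H _ (Cper_transl d (rowvec theta i (s i)) h Hh))).
  replace (Pop_list l s Y h - c * Pop_list l s Y (fun x => h (vadd x (rowvec theta i (s i)))))
    with (1 * Pop_list l s Y h + - c * Pop_list l s Y (transl (rowvec theta i (s i)) h))
    by (unfold transl; ring).
  eapply LimRight0_ext; [|apply H3]. intros t _. unfold transl. ring.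
Qed.

Definition transl_bounded (Z : meas) : Prop :=
  forall h, Cper d h -> exists K, forall v, Rabs (Z (transl v h)) <= K.

Lemma transl_bounded_meas X : IsMeasure d X -> transl_bounded X.
Proof.
  intros HX h Hh. destruct (Cper_bounded d h Hh) as [C [HC0 HC]]. exists (C * mass X). intros v.
  apply (meas_abs_le d); auto. apply Cper_transl; auto. intros; unfold transl; auto.
Qed.

Lemma transl_bounded_Dop i s Z : 0 < r i -> 0 <= s i -> transl_bounded Z -> transl_bounded (D i s Z).
Proof.
  intros Hr Hs HZ h Hh. destruct (HZ h Hh) as [K HK]. exists (K + K). intros v.
  unfold Dop, pushR.
  change (fun x => transl v h (vadd x (rowvec theta i (s i))))
    with (transl (rowvec theta i (s i)) (transl v h)).
  rewrite transl_transl. set (c := exp (- (beta * s i * r i))).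
  assert (Hc : 0 < c <= 1).
  { split. apply exp_pos. apply exp_neg_le1; apply Rmult_le_pos; [apply Rmult_le_pos|]; lra. }
  pose proof (HK v). pose proof (HK (vadd (rowvec theta i (s i)) v)).
  eapply Rle_trans. apply Rabs_triang. rewrite Rabs_Ropp, Rabs_mult, (Rabs_right c) by lra.
  assert (c * Rabs (Z (transl (vadd (rowvec theta i (s i)) v) h)) <= 1 * K)
    by (apply Rmult_le_compat; try lra; apply Rabs_pos).
  lra.
Qed.

(* Letting [t -> +oo] kills the translated term of [D_i(t) Z] since [Z] is bounded on translates. *)
Lemma PosFun_of_Dop_at i Z : 0 < r i -> transl_bounded Z ->
  (forall t, 0 <= t -> PosFun d (Dop_at theta beta r i t Z)) -> PosFun d Z.
Proof.
  intros Hr HZ HN h Hh Hp. apply Rnot_lt_le. intro Hlt.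
  destruct (HZ h Hh) as [K HK].
  assert (HK0 : 0 <= K) by (eapply Rle_trans; [apply Rabs_pos | apply (HK (fun _ => 0))]).
  assert (Hbr : 0 < beta * r i) by (apply Rmult_lt_0_compat; auto).
  destruct (exp_tail K (beta * r i) HK0 Hbr (- Z h) ltac:(lra)) as [M [HM PM]].
  specialize (HN M HM h Hh Hp). unfold Dop_at, Dop, pushR in HN. cbv beta in HN.
  specialize (PM M (Rle_refl M)). specialize (HK (rowvec theta i M)). unfold transl in HK.
  apply Rabs_le_between in HK. rewrite exp_beta_t_r in HN.
  assert (exp (- (beta * r i * M)) * (- K) <=
          exp (- (beta * r i * M)) * Z (fun x => h (vadd x (rowvec theta i M))))
    by (apply Rmult_le_compat_l; [left; apply exp_pos | lra]).
  rewrite Rmult_comm in PM. lra.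
Qed.

Lemma PosFun_of_Pop_list l : NoDup l -> rpos l -> forall Z, transl_bounded Z ->
  (forall s, (forall i, In i l -> 0 <= s i) -> PosFun d (Pop_list l s Z)) -> PosFun d Z.
Proof.
  induction l as [|i l IH]; intros Hnd Hr Z HZ H.
  - apply (H (fun _ => 0)). intros; lra.
  - inversion Hnd as [|? ? Hni Hnd']. subst. destruct (rpos_cons i l Hr) as [Hri Hrl].
    apply (PosFun_of_Dop_at i); auto. intros t Ht. apply IH; auto.
    + apply transl_bounded_Dop; auto.
    + intros s Hs. unfold Dop_at. fold (Dop_at theta beta r i t Z).
      rewrite Pop_list_Dop_at by auto. apply H, upd_nonneg; auto.
Qed.

Lemma Subinvariant_list_dir j l X : NoDup (j :: l) -> rpos (j :: l) -> Subinvariant_list (j :: l) X ->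
  dir_subinvariant d theta beta r j X.
Proof.
  intros Hnd Hr [HX HP]. inversion Hnd as [|? ? Hnj Hnd']. subst.
  destruct (rpos_cons j l Hr) as [Hrj Hrl]. split; auto.
  intros t Ht. apply (PosFun_of_Pop_list l); auto.
  - apply transl_bounded_Dop; auto. apply transl_bounded_meas; auto.
  - intros s Hs. rewrite Pop_list_Dop_at by auto. apply HP, upd_nonneg; auto.
Qed.

Lemma resolvent_comp_IsMeasure l m : rpos l -> IsMeasure d m -> IsMeasure d (resolvent_comp l m).
Proof.
  revert m; induction l as [|j l IH]; intros m Hr Hm; simpl; auto.
  destruct (rpos_cons j l Hr). apply IH; auto. apply resolvent_IsMeasure; auto.
Qed.

Lemma resolvent_comp_ext l m m' : MeasEq d m m' -> MeasEq d (resolvent_comp l m) (resolvent_comp l m').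
Proof.
  revert m m'; induction l as [|j l IH]; intros m m' H; simpl; auto.
  apply IH, resolvent_ext, H.
Qed.

Lemma resolvent_comp_mass l m : rpos l -> IsMeasure d m ->
  mass (resolvent_comp l m) = mass m * lprod l (fun j => / (beta * r j)).
Proof.
  revert m; induction l as [|j l IH]; intros m Hr Hm; simpl. ring.
  destruct (rpos_cons j l Hr). rewrite IH, (resolvent_mass d); auto. ring.
  apply resolvent_IsMeasure; auto.
Qed.

Lemma resolvent_comp_Dop l j s Z : rpos l -> IsMeasure d Z ->
  MeasEq d (resolvent_comp l (D j s Z)) (D j s (resolvent_comp l Z)).
Proof.
  revert Z; induction l as [|i l IH]; intros Z Hr HZ; simpl. { intros f Hf; reflexivity. }
  destruct (rpos_cons i l Hr).
  eapply MeasEq_trans. apply resolvent_comp_ext. intros f Hf. apply (resolvent_Dop_comm d); auto.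
  apply IH; auto. apply resolvent_IsMeasure; auto.
Qed.

Lemma Subinvariant_list_resolvent_comp l mu0 : rpos l -> IsMeasure d mu0 ->
  Subinvariant_list l (resolvent_comp l mu0).
Proof.
  revert mu0; induction l as [|j l IH]; intros mu0 Hr Hm.
  - split; auto. intros s _. simpl. destruct Hm as [_ [_ H]]; exact H.
  - destruct (rpos_cons j l Hr) as [Hrj Hrl]. split. apply resolvent_comp_IsMeasure; auto.
    intros s Hs. simpl. rewrite Dop_Pop_list.
    assert (Hsj : 0 <= s j) by (apply Hs; simpl; auto).
    set (B := resolvent_upto theta beta r j (s j) mu0).
    assert (HB : IsMeasure d B) by (apply resolvent_upto_IsMeasure; auto).
    assert (E : MeasEq d (D j s (resolvent_comp l (Res j mu0))) (resolvent_comp l B)).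
    { eapply MeasEq_trans. apply MeasEq_sym, resolvent_comp_Dop; auto. apply resolvent_IsMeasure; auto.
      apply resolvent_comp_ext. intros f Hf. rewrite (Dop_ext_s theta beta r j s (fun _ => s j)) by auto.
      apply (Dop_at_resolvent d); auto. }
    intros h Hh Hp. rewrite (Pop_list_ext l s _ _ E h Hh).
    apply (proj2 (IH B Hrl HB)); auto. intros; apply Hs; simpl; auto.
Qed.

Lemma resolvent_comm i j W : 0 < r i -> 0 < r j -> IsMeasure d W ->
  MeasEq d (Res i (Res j W)) (Res j (Res i W)).
Proof.
  intros Hri Hrj HW f Hf.
  set (X := Res i (Res j W)).
  assert (HJ : dir_subinvariant d theta beta r j X).
  { split. apply resolvent_IsMeasure; auto. apply resolvent_IsMeasure; auto.
    intros t Ht h Hh Hp. unfold X. unfold Dop_at.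
    rewrite <- (resolvent_Dop_comm d); auto; [|apply resolvent_IsMeasure; auto].
    rewrite (resolvent_ext d theta beta r i _ (resolvent_upto theta beta r j t W)); auto.
    - apply (resolvent_IsMeasure d); auto. apply resolvent_upto_IsMeasure; auto.
    - intros g Hg. apply (Dop_at_resolvent d); auto. }
  rewrite <- (resolvent_generator d theta beta r Hbeta j Hrj X f HJ Hf).
  apply (resolvent_ext d); auto. intros g Hg. unfold X. apply (generator_resolvent_resolvent d); auto.
Qed.

Lemma resolvent_comp_resolvent l j Y : rpos l -> 0 < r j -> IsMeasure d Y ->
  MeasEq d (resolvent_comp l (Res j Y)) (Res j (resolvent_comp l Y)).
Proof.
  revert Y; induction l as [|i l IH]; intros Y Hr Hrj HY; simpl. { intros f Hf; reflexivity. }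
  destruct (rpos_cons i l Hr).
  eapply MeasEq_trans. apply resolvent_comp_ext. apply resolvent_comm; auto.
  apply IH; auto. apply resolvent_IsMeasure; auto.
Qed.

Definition lvec (l : list nat) (w : vec) : vec := fun i => lsum l (fun j => theta j i * w j).

Lemma IterInt_resolvent_comp l m f : NoDup l -> rpos l -> IsMeasure d m -> Cper d f ->
  IterInt l (fun w => exp (- (beta * lsum l (fun j => w j * r j))) * m (fun x => f (vadd x (lvec l w))))
    (resolvent_comp l m f).
Proof.
  revert m; induction l as [|j l IH]; intros m Hnd Hr Hm Hf.
  - simpl. intros w. unfold lvec; simpl. rewrite Rmult_0_r, Ropp_0, exp_0, Rmult_1_l.
    apply meas_ext. intros x. f_equal. apply functional_extensionality; intro; unfold vadd; ring.
  - inversion Hnd as [|? ? Hnj Hnd']. subst. destruct (rpos_cons j l Hr) as [Hrj Hrl].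
    exists (fun w => exp (- (beta * lsum l (fun i => w i * r i))) * Res j m (fun x => f (vadd x (lvec l w)))).
    split; [|apply IH; auto; apply resolvent_IsMeasure; auto].
    intros w. apply is_RInt_0_oo_ImproperInt.
    set (S := lsum l (fun i => w i * r i)). set (V := lvec l w).
    eapply is_RInt_0_oo_ext; [|apply (is_RInt_0_oo_scal _ _ (exp (- (beta * S)))
      (resolvent_spec d theta beta r Hbeta j m (transl V f) Hrj Hm (Cper_transl d V f Hf)))].
    intros t. simpl. unfold weighted_orbit.
    assert (E1 : lsum l (fun i => upd w j t i * r i) = S).
    { apply lsum_ext. intros i Hi. now rewrite (upd_notin_eq l). }
    assert (E2 : lvec (j :: l) (upd w j t) = vadd (rowvec theta j t) V).
    { apply functional_extensionality; intro i. unfold lvec, vadd, rowvec, V. simpl. rewrite upd_eq.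
      f_equal. ring. apply lsum_ext. intros i0 Hi0. now rewrite (upd_notin_eq l). }
    rewrite E1, E2, upd_eq, transl_transl.
    replace (exp (- (beta * (t * r j + S)))) with (exp (- (beta * S)) * exp (- (beta * t * r j)))
      by (rewrite <- exp_plus; f_equal; ring).
    unfold transl. ring.
Qed.

Lemma Subinvariant_list_generator j l nu : NoDup (j :: l) -> rpos (j :: l) ->
  Subinvariant_list (j :: l) nu -> Subinvariant_list l (Gen j nu).
Proof.
  intros Hnd Hr Hs. inversion Hnd as [|? ? Hnj Hnd']. subst.
  assert (HJ := Subinvariant_list_dir j l nu Hnd Hr Hs). destruct (rpos_cons j l Hr) as [Hrj Hrl].
  split. apply (generator_IsMeasure d); auto.
  intros s Hs0 h Hh Hp.
  apply (LimRight0_ge0 (fun t => Pop_list l s (diff_quot theta beta r j t nu) h)).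
  - apply Pop_list_lim; auto. intros; apply (generator_spec d); auto.
  - intros t Ht. unfold diff_quot. rewrite Pop_list_scal. apply Rmult_le_pos.
    left; apply Rinv_0_lt_compat; auto.
    rewrite Pop_list_Dop_at by auto. apply (proj2 Hs (upd s j t)); auto.
    apply upd_nonneg; auto; lra.
Qed.

Lemma generator_comp_spec l : NoDup l -> rpos l -> forall nu, Subinvariant_list l nu ->
  IsMeasure d (generator_comp l nu) /\
  mass (generator_comp l nu) = mass nu * lprod l (fun j => beta * r j) /\
  forall f, Cper d f -> IterLim l (fun s => / lprod l s * Pop_list l s nu f) (generator_comp l nu f).
Proof.
  induction l as [|j l IH]; intros Hnd Hr nu Hs.
  - simpl. split. apply Hs. split. ring. intros f Hf s. now rewrite Rinv_1, Rmult_1_l.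
  - inversion Hnd as [|? ? Hnj Hnd']. subst. destruct (rpos_cons j l Hr) as [Hrj Hrl].
    assert (HJ := Subinvariant_list_dir j l nu Hnd Hr Hs).
    destruct (IH Hnd' Hrl (Gen j nu) (Subinvariant_list_generator j l nu Hnd Hr Hs)) as [H1 [H2 H3]].
    simpl. split; auto. split. { rewrite H2, (generator_mass d); auto. ring. }
    intros f Hf. exists (fun s => / lprod l s * Pop_list l s (Gen j nu) f). split; [|apply H3; auto].
    intros s Hspos.
    assert (HL := Pop_list_lim l s (fun t => diff_quot theta beta r j t nu) (Gen j nu)
       (fun h Hh => generator_spec d theta beta r Hbeta j Hrj nu h HJ Hh) f Hf).
    eapply LimRight0_ext; [|apply (LimRight0_scal _ _ (/ lprod l s) HL)]. intros t Ht. simpl.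
    rewrite upd_eq, (lprod_ext l (upd s j t) s) by (intros; now apply (upd_notin_eq l)).
    change (D j (upd s j t) (Pop_list l (upd s j t) nu)) with (Pop_list (j :: l) (upd s j t) nu).
    rewrite <- Pop_list_Dop_at by auto. unfold diff_quot. rewrite Pop_list_scal, Rinv_mult. ring.
Qed.

Lemma resolvent_comp_generator_comp l nu : NoDup l -> rpos l -> Subinvariant_list l nu ->
  MeasEq d (resolvent_comp l (generator_comp l nu)) nu.
Proof.
  revert nu; induction l as [|j l IH]; intros nu Hnd Hr Hs. { intros f Hf; reflexivity. }
  inversion Hnd as [|? ? Hnj Hnd']. subst. destruct (rpos_cons j l Hr) as [Hrj Hrl].
  assert (HJ := Subinvariant_list_dir j l nu Hnd Hr Hs).
  assert (HY := Subinvariant_list_generator j l nu Hnd Hr Hs).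
  destruct (generator_comp_spec l Hnd' Hrl (Gen j nu) HY) as [HGm _].
  simpl. eapply MeasEq_trans. apply resolvent_comp_resolvent; auto.
  intros f Hf. rewrite (resolvent_ext d theta beta r j _ (Gen j nu)); auto.
  apply (resolvent_generator d); auto.
Qed.

Lemma resolvent_comp_inj l Y1 Y2 : rpos l -> IsMeasure d Y1 -> IsMeasure d Y2 ->
  MeasEq d (resolvent_comp l Y1) (resolvent_comp l Y2) -> MeasEq d Y1 Y2.
Proof.
  revert Y1 Y2; induction l as [|j l IH]; intros Y1 Y2 Hr H1 H2 H; simpl in *; auto.
  destruct (rpos_cons j l Hr) as [Hrj Hrl].
  assert (E : MeasEq d (Res j Y1) (Res j Y2)) by (apply IH; auto; apply resolvent_IsMeasure; auto).
  intros f Hf. rewrite <- (generator_resolvent d theta beta r Hbeta j Y1 f),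
                       <- (generator_resolvent d theta beta r Hbeta j Y2 f) by auto.
  apply (generator_ext d); auto.
Qed.

Lemma generator_comp_resolvent_comp l mu0 : NoDup l -> rpos l -> IsMeasure d mu0 ->
  MeasEq d (generator_comp l (resolvent_comp l mu0)) mu0.
Proof.
  intros Hnd Hr Hm. assert (HS := Subinvariant_list_resolvent_comp l mu0 Hr Hm).
  destruct (generator_comp_spec l Hnd Hr _ HS) as [HW _].
  apply (resolvent_comp_inj l); auto. apply resolvent_comp_generator_comp; auto.
Qed.

Lemma resolvent_comp_lin l m1 m2 a b : rpos l -> IsMeasure d m1 -> IsMeasure d m2 ->
  MeasEq d (resolvent_comp l (fun f => a * m1 f + b * m2 f))
           (fun f => a * resolvent_comp l m1 f + b * resolvent_comp l m2 f).
Proof.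
  revert m1 m2; induction l as [|j l IH]; intros m1 m2 Hr H1 H2; simpl. { intros f Hf; reflexivity. }
  destruct (rpos_cons j l Hr) as [Hrj Hrl].
  eapply MeasEq_trans; [|apply IH; auto; apply resolvent_IsMeasure; auto].
  apply resolvent_comp_ext. intros f Hf. apply resolvent_eq.
  eapply is_RInt_0_oo_ext; [|apply is_RInt_0_oo_lin; apply (resolvent_spec d); auto].
  intros t. unfold weighted_orbit. ring.
Qed.

End Products.

(** * Weak* continuity *)

Section WeakStar.
Variable d : nat.

Lemma WeakStarCont_id (A : meas -> Prop) : WeakStarCont d A (fun m => m).
Proof.
  intros m0 Hm0 f Hf eps He. exists (f :: nil), eps. split; auto. split.
  - intros g [Hg|[]]; subst; auto.
  - intros m Hm H. apply H. simpl; auto.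
Qed.

Lemma WeakStarCont_sub (A B : meas -> Prop) Phi : (forall m, B m -> A m) ->
  WeakStarCont d A Phi -> WeakStarCont d B Phi.
Proof.
  intros HAB H m0 Hm0 f Hf eps He. destruct (H m0 (HAB m0 Hm0) f Hf eps He) as [gs [dl [Hd [Hgs P]]]].
  exists gs, dl. split; [exact Hd|]. split; [exact Hgs|]. intros m Hm Hc. apply P; auto.
Qed.

Lemma WeakStarCont_comp (A B : meas -> Prop) Phi1 Phi2 : WeakStarCont d A Phi1 ->
  (forall m, A m -> B (Phi1 m)) -> WeakStarCont d B Phi2 -> WeakStarCont d A (fun m => Phi2 (Phi1 m)).
Proof.
  intros H1 HAB H2 m0 Hm0 f Hf eps He.
  destruct (H2 (Phi1 m0) (HAB m0 Hm0) f Hf eps He) as [gs [dl [Hd [Hgs P]]]].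
  assert (C : forall gs0, (forall g, In g gs0 -> Cper d g) ->
    exists gs' dl', 0 < dl' /\ (forall g, In g gs' -> Cper d g) /\
      forall m, A m -> (forall g, In g gs' -> Rabs (m g - m0 g) < dl') ->
        forall g, In g gs0 -> Rabs (Phi1 m g - Phi1 m0 g) < dl).
  { induction gs0 as [|g0 gs0 IH]; intros Hc.
    - exists nil, 1. split; [lra|]. split. intros g []. intros m _ _ g [].
    - destruct IH as [gs1 [d1 [Hd1 [Hc1 P1]]]]. intros; apply Hc; simpl; auto.
      destruct (H1 m0 Hm0 g0 (Hc g0 (or_introl eq_refl)) dl Hd) as [gs2 [d2 [Hd2 [Hc2 P2]]]].
      exists (gs1 ++ gs2), (Rmin d1 d2). split. apply Rmin_pos; auto. split.
      + intros g Hg. apply in_app_or in Hg. destruct Hg; auto.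
      + intros m Hm Hc3 g [Hg|Hg].
        * subst. apply P2; auto. intros g' Hg'. eapply Rlt_le_trans.
          apply Hc3. apply in_or_app; auto. apply Rmin_r.
        * apply P1; auto. intros g' Hg'. eapply Rlt_le_trans.
          apply Hc3. apply in_or_app; auto. apply Rmin_l. }
  destruct (C gs Hgs) as [gs' [dl' [Hd' [Hc' P']]]].
  exists gs', dl'. split; [exact Hd'|]. split; [exact Hc'|].
  intros m Hm Hc. apply P. apply HAB; auto. intros g Hg. apply P'; auto.
Qed.

End WeakStar.

Lemma grid_point_close (h : R) : 0 < h -> forall n u, 0 <= u <= INR n * h ->
  exists i, (i <= n)%nat /\ Rabs (u - INR i * h) <= h.
Proof.
  intros Hh n. induction n; intros u Hu.
  - exists O. split; auto. simpl in *. rewrite Rmult_0_l, Rminus_0_r, Rabs_right; lra.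
  - destruct (Rle_dec u (INR n * h)).
    + destruct (IHn u) as [i [Hi Hu2]]. split; lra. exists i; split; auto.
    + exists (S n). split; auto. rewrite S_INR in *. rewrite Rabs_left1; nra.
Qed.

Lemma exp_weight_bound c T eta K (D : R -> R) : 0 < c -> 0 <= eta -> 0 <= K ->
  (forall u, 0 <= u <= T -> Rabs (D u) <= eta) -> (forall u, Rabs (D u) <= K) ->
  forall u, 0 <= u -> Rabs (exp (- (c * u)) * D u) <= (eta + K * exp (- (c / 2 * T))) * exp (- (c / 2 * u)).
Proof.
  intros Hc Heta HK H1 H2 u Hu.
  rewrite Rabs_mult, Rabs_right by (apply Rle_ge; left; apply exp_pos).
  assert (Eu : exp (- (c * u)) = exp (- (c / 2 * u)) * exp (- (c / 2 * u)))
    by (rewrite <- exp_plus; f_equal; field).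
  pose proof (exp_pos (- (c * u))). pose proof (exp_pos (- (c / 2 * u))). pose proof (exp_pos (- (c / 2 * T))).
  pose proof (Rabs_pos (D u)).
  destruct (Rle_dec u T).
  - assert (exp (- (c * u)) <= exp (- (c / 2 * u))) by (apply exp_le_compat; nra).
    assert (Hu' : Rabs (D u) <= eta) by (apply H1; lra).
    assert (exp (- (c * u)) * Rabs (D u) <= exp (- (c / 2 * u)) * eta)
      by (apply Rmult_le_compat; lra).
    assert (0 <= K * exp (- (c / 2 * T)) * exp (- (c / 2 * u))) by (repeat apply Rmult_le_pos; lra).
    lra.
  - assert (exp (- (c / 2 * u)) <= exp (- (c / 2 * T))) by (apply exp_le_compat; nra).
    rewrite Eu.
    assert (exp (- (c / 2 * u)) * exp (- (c / 2 * u)) * Rabs (D u) <=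
            exp (- (c / 2 * u)) * exp (- (c / 2 * T)) * K).
    { apply Rmult_le_compat; auto. apply Rmult_le_pos; lra. apply Rmult_le_compat_l; lra. }
    nra.
Qed.

Section WeakStarResolvent.
Variable d : nat.
Variable theta : nat -> nat -> R.
Variable beta : R.
Variable r : nat -> R.
Hypothesis Hbeta : 0 < beta.

(* The test functions are the translates of [f] at the points of a fine grid of [0, T]. *)
Lemma orbit_segment_close j f m0 T eta : Cper d f -> IsMeasure d m0 -> 0 <= T -> 0 < eta ->
  exists gs dl, 0 < dl /\ (forall g, In g gs -> Cper d g) /\
    forall m, IsMeasure d m -> mass m <= mass m0 + 1 -> (forall g, In g gs -> Rabs (m g - m0 g) < dl) ->
      forall u, 0 <= u <= T ->
        Rabs (m (transl (rowvec theta j u) f) - m0 (transl (rowvec theta j u) f)) <= eta.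
Proof.
  intros Hf Hm0 HT Heta. set (M0 := mass m0). assert (HM0 : 0 <= M0) by (apply (mass_ge0 d); auto).
  destruct (meas_transl_rowvec_close d theta j f Hf (eta / 3 / (M0 + 1))) as [h1 [Hh1 PR]].
  { apply Rdiv_lt_0_compat; lra. }
  set (hs := h1 / 2). assert (Hhs : 0 < hs) by (unfold hs; lra).
  destruct (INR_unbounded (T / hs)) as [N HN]. specialize (HN N (le_n N)).
  assert (HTN : T <= INR N * hs).
  { apply (Rmult_le_reg_r (/ hs)). apply Rinv_0_lt_compat; auto.
    rewrite Rmult_assoc, Rinv_r, Rmult_1_r by lra. exact HN. }
  exists (map (fun i => transl (rowvec theta j (INR i * hs)) f) (seq 0 (S N))), (eta / 3).
  split; [lra|]. split.
  { intros g Hg. apply in_map_iff in Hg. destruct Hg as [i [Hi _]]. subst. apply Cper_transl; auto. }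
  intros m Hm Hmass Hclose u Hu.
  destruct (grid_point_close hs Hhs N u ltac:(lra)) as [i [Hi Hui]].
  set (ui := INR i * hs).
  assert (Hui2 : Rabs (u - ui) < h1) by (unfold ui, hs in *; lra).
  assert (A1 := PR u ui Hui2 (fun _ => 0) m Hm). assert (A2 := PR u ui Hui2 (fun _ => 0) m0 Hm0).
  replace (vadd (rowvec theta j u) (fun _ => 0)) with (rowvec theta j u) in A1, A2
    by (apply functional_extensionality; intro; unfold vadd; ring).
  replace (vadd (rowvec theta j ui) (fun _ => 0)) with (rowvec theta j ui) in A1, A2
    by (apply functional_extensionality; intro; unfold vadd; ring).
  assert (A3 : Rabs (m (transl (rowvec theta j ui) f) - m0 (transl (rowvec theta j ui) f)) < eta / 3).
  { apply Hclose. apply in_map_iff. exists i. split; auto. apply in_seq. lia. }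
  assert (eta / 3 / (M0 + 1) * mass m <= eta / 3).
  { apply Rle_trans with (eta / 3 / (M0 + 1) * (M0 + 1)); [|right; field; lra].
    apply Rmult_le_compat_l; [left; apply Rdiv_lt_0_compat|]; lra. }
  assert (eta / 3 / (M0 + 1) * mass m0 <= eta / 3) by (apply Rdiv_succ_mul_le; [lra | exact HM0]).
  apply Rabs_le_between in A1. apply Rabs_le_between in A2. apply Rabs_def2 in A3.
  apply Rabs_le_between. lra.
Qed.

Lemma resolvent_diff_bound j m m0 f T eta K : 0 < r j -> IsMeasure d m -> IsMeasure d m0 ->
  Cper d f -> 0 <= eta -> 0 <= K ->
  (forall u, 0 <= u <= T ->
     Rabs (m (transl (rowvec theta j u) f) - m0 (transl (rowvec theta j u) f)) <= eta) ->
  (forall u, Rabs (m (transl (rowvec theta j u) f) - m0 (transl (rowvec theta j u) f)) <= K) ->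
  Rabs (resolvent theta beta r j m f - resolvent theta beta r j m0 f) <=
    (eta + K * exp (- (beta * r j / 2 * T))) * / (beta * r j / 2).
Proof.
  intros Hr Hm Hm0 Hf Heta HK H1 H2.
  set (c := beta * r j). assert (Hc : 0 < c) by (unfold c; apply Rmult_lt_0_compat; lra).
  assert (I3 := is_RInt_0_oo_lin _ _ _ _ 1 (-1) (resolvent_spec d theta beta r Hbeta j m f Hr Hm Hf)
                  (resolvent_spec d theta beta r Hbeta j m0 f Hr Hm0 Hf)).
  assert (I4 := is_RInt_0_oo_scal _ _ (eta + K * exp (- (c / 2 * T)))
                  (is_RInt_0_oo_exp (c / 2) ltac:(lra))).
  replace (resolvent theta beta r j m f - resolvent theta beta r j m0 f)
    with (1 * resolvent theta beta r j m f + -1 * resolvent theta beta r j m0 f) by ring.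
  apply (is_RInt_0_oo_abs_le _ _ _ _ I3 I4).
  intros u Hu. unfold weighted_orbit. rewrite exp_beta_t_r. fold c.
  replace (1 * (exp (- (c * u)) * m (transl (rowvec theta j u) f)) +
           -1 * (exp (- (c * u)) * m0 (transl (rowvec theta j u) f)))
    with (exp (- (c * u)) * (m (transl (rowvec theta j u) f) - m0 (transl (rowvec theta j u) f)))
    by ring.
  apply (exp_weight_bound c T eta K
           (fun u => m (transl (rowvec theta j u) f) - m0 (transl (rowvec theta j u) f))); auto.
Qed.

Lemma WeakStarCont_resolvent j : 0 < r j -> WeakStarCont d (IsMeasure d) (resolvent theta beta r j).
Proof.
  intros Hr m0 Hm0 f Hf eps He.
  destruct (Cper_bounded d f Hf) as [C [HC0 HC]].
  set (M0 := mass m0). assert (HM0 : 0 <= M0) by (apply (mass_ge0 d); auto).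
  set (c := beta * r j). assert (Hc : 0 < c) by (unfold c; apply Rmult_lt_0_compat; lra).
  set (K := (2 * M0 + 1) * C). assert (HK : 0 <= K) by (unfold K; apply Rmult_le_pos; lra).
  set (eta := eps * c / 4).
  assert (Heta : 0 < eta) by (unfold eta; apply Rdiv_lt_0_compat; [apply Rmult_lt_0_compat|]; lra).
  destruct (exp_tail K (c / 2) HK ltac:(lra) eta Heta) as [T [HT PT]].
  destruct (orbit_segment_close j f m0 T eta Hf Hm0 HT Heta) as [gs [dl [Hdl [Hgs P]]]].
  exists ((fun _ : vec => 1) :: gs), (Rmin 1 dl). split. { apply Rmin_pos; lra. } split.
  { intros g [Hg|Hg]. subst; apply Cper_const. auto. }
  intros m Hm Hclose.
  assert (Hmass : mass m <= M0 + 1).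
  { specialize (Hclose (fun _ => 1) (or_introl eq_refl)). apply Rabs_def2 in Hclose.
    pose proof (Rmin_l 1 dl). unfold M0, mass in *. lra. }
  set (Dl := fun u => m (transl (rowvec theta j u) f) - m0 (transl (rowvec theta j u) f)).
  assert (HD1 : forall u, 0 <= u <= T -> Rabs (Dl u) <= eta).
  { apply P; auto. intros g Hg. eapply Rlt_le_trans. apply Hclose. right; auto. apply Rmin_r. }
  assert (HD2 : forall u, Rabs (Dl u) <= K).
  { intros u. unfold Dl. eapply Rle_trans. apply Rabs_triang. rewrite Rabs_Ropp.
    assert (Rabs (m (transl (rowvec theta j u) f)) <= C * mass m)
      by (apply (meas_abs_le d); auto; [apply Cper_transl; auto | intros; unfold transl; auto]).
    assert (Rabs (m0 (transl (rowvec theta j u) f)) <= C * mass m0)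
      by (apply (meas_abs_le d); auto; [apply Cper_transl; auto | intros; unfold transl; auto]).
    pose proof (mass_ge0 d m Hm). unfold K. fold M0 in H0. nra. }
  eapply Rle_lt_trans; [apply (resolvent_diff_bound j m m0 f T eta K); auto; lra|].
  fold c. specialize (PT T (Rle_refl T)).
  apply Rlt_le_trans with ((eta + eta) * / (c / 2)).
  - apply Rmult_lt_compat_r. apply Rinv_0_lt_compat; lra. lra.
  - unfold eta. right. field. lra.
Qed.

Lemma generator_avg_close j f : 0 < r j -> Cper d f -> forall eta, 0 < eta -> exists e, 0 < e /\
  forall Y, dir_subinvariant d theta beta r j Y ->
    Rabs (generator theta beta r j Y f - Y (ray_avg_gen theta beta r j e f)) <= eta * (beta * r j * mass Y).
Proof.
  intros Hrj Hf eta Heta. destruct (ray_avg_close d theta j f Hf eta Heta) as [e0 [He0 Pe]].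
  exists (e0 / 2). split; [lra|]. intros Y HY.
  assert (HGY := generator_IsMeasure d theta beta r Hbeta j Hrj Y HY).
  rewrite <- (generator_avg d theta beta r Hbeta j Hrj Y (e0 / 2) f HY ltac:(lra) Hf).
  rewrite <- (meas_minus d _ HGY) by (auto; apply ray_avg_Cper; auto; lra).
  rewrite <- (generator_mass d theta beta r Hbeta j Hrj Y HY).
  apply (meas_abs_le d); auto. apply Cper_minus; auto. apply ray_avg_Cper; auto; lra.
  intros x. apply Pe; lra.
Qed.

Lemma WeakStarCont_generator j : 0 < r j ->
  WeakStarCont d (dir_subinvariant d theta beta r j) (generator theta beta r j).
Proof.
  intros Hrj X0 HJ0 f Hf eps He.
  set (M0 := mass X0). assert (HM0 : 0 <= M0) by (apply (mass_ge0 d); apply HJ0).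
  set (c := beta * r j). assert (Hc : 0 < c) by (unfold c; apply Rmult_lt_0_compat; lra).
  set (K := c * (2 * M0 + 1)). assert (HK : 0 <= K) by (unfold K; apply Rmult_le_pos; lra).
  destruct (generator_avg_close j f Hrj Hf (eps / 3 / (K + 1))) as [e [He0 Pe]].
  { apply Rdiv_lt_0_compat; lra. }
  set (q := ray_avg_gen theta beta r j e f).
  exists ((fun _ : vec => 1) :: q :: nil), (Rmin 1 (eps / 3)). split. { apply Rmin_pos; lra. } split.
  { intros h [Hh|[Hh|[]]]; subst. apply Cper_const. apply ray_avg_gen_Cper; auto. }
  intros X HJ Hclose.
  assert (Hmass : mass X <= M0 + 1).
  { specialize (Hclose (fun _ => 1) (or_introl eq_refl)). apply Rabs_def2 in Hclose.
    pose proof (Rmin_l 1 (eps / 3)). unfold M0, mass in *. lra. }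
  assert (HmX : 0 <= mass X) by (apply (mass_ge0 d); apply HJ).
  assert (Hq : Rabs (X q - X0 q) < eps / 3).
  { eapply Rlt_le_trans. apply Hclose. simpl; auto. apply Rmin_r. }
  assert (B1 := Pe X HJ). assert (B2 := Pe X0 HJ0). fold c q in B1, B2.
  assert (eps / 3 / (K + 1) * (c * mass X) + eps / 3 / (K + 1) * (c * M0) <= eps / 3).
  { rewrite <- Rmult_plus_distr_l. apply Rle_trans with (eps / 3 / (K + 1) * K).
    apply Rmult_le_compat_l. left; apply Rdiv_lt_0_compat; lra. unfold K; nra.
    apply Rdiv_succ_mul_le; lra. }
  apply Rabs_le_between in B1. apply Rabs_le_between in B2. apply Rabs_def2 in Hq.
  fold M0 in B2. apply Rabs_def1; lra.
Qed.

Lemma WeakStarCont_resolvent_comp l : rpos r l ->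
  WeakStarCont d (IsMeasure d) (resolvent_comp theta beta r l).
Proof.
  induction l as [|j l IH]; intros Hr.
  - apply WeakStarCont_id.
  - destruct (rpos_cons r j l Hr) as [Hrj Hrl].
    apply (WeakStarCont_comp d (IsMeasure d) (IsMeasure d) (resolvent theta beta r j)
             (resolvent_comp theta beta r l)).
    apply WeakStarCont_resolvent; auto. intros; apply resolvent_IsMeasure; auto. apply IH; auto.
Qed.

Lemma WeakStarCont_generator_comp l : NoDup l -> rpos r l ->
  WeakStarCont d (Subinvariant_list d theta beta r l) (generator_comp theta beta r l).
Proof.
  induction l as [|j l IH]; intros Hnd Hr.
  - apply WeakStarCont_id.
  - inversion Hnd as [|? ? Hnj Hnd']. subst. destruct (rpos_cons r j l Hr) as [Hrj Hrl].
    apply (WeakStarCont_comp d _ (Subinvariant_list d theta beta r l) (generator theta beta r j)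
             (generator_comp theta beta r l)).
    + apply (WeakStarCont_sub d (dir_subinvariant d theta beta r j)).
      * intros m Hm. eapply Subinvariant_list_dir; eauto.
      * apply WeakStarCont_generator; auto.
    + intros; apply Subinvariant_list_generator; auto.
    + apply IH; auto.
Qed.

End WeakStarResolvent.

Lemma Subinvariant_iff_list d k theta beta r nu :
  Subinvariant d k theta beta r nu <-> Subinvariant_list d theta beta r (seq 0 k) nu.
Proof.
  unfold Subinvariant, Subinvariant_list. split; intros [H1 H2]; split; auto; intros s Hs.
  - apply H2. intros j Hj. apply Hs. apply in_seq. lia.
  - apply H2. intros j Hj. apply in_seq in Hj. apply Hs. lia.
Qed.

Lemma integrand_seq k theta beta r (mu : meas) f :
  (fun w => exp (- (beta * sumR k (fun j => w j * r j))) * mu (fun x => f (vadd x (thetaT k theta w)))) =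
  (fun w => exp (- (beta * lsum (seq 0 k) (fun j => w j * r j))) *
            mu (fun x => f (vadd x (lvec theta (seq 0 k) w)))).
Proof.
  apply functional_extensionality; intro w. rewrite sumR_lsum. do 2 f_equal.
  apply functional_extensionality; intro x. do 2 f_equal.
  apply functional_extensionality; intro i. apply sumR_lsum.
Qed.

Lemma Pop_quot_seq k theta beta r (nu : meas) f :
  (fun s : vec => / prodR k s * Pop k theta beta r s nu f) =
  (fun s : vec => / lprod (seq 0 k) s * Pop_list theta beta r (seq 0 k) s nu f).
Proof. apply functional_extensionality; intro s. now rewrite prodR_lprod. Qed.

Section SeqIndices.
Variables (d k : nat) (theta : nat -> nat -> R) (beta : R) (r : nat -> R).
Hypothesis Hbeta : 0 < beta.
Hypothesis Hr : forall j, (j < k)%nat -> 0 < r j.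

Lemma rpos_seq : rpos r (seq 0 k).
Proof. intros i Hi. apply in_seq in Hi. apply Hr. lia. Qed.

Lemma IterInt_resolvent_comp_seq mu f : IsMeasure d mu -> Cper d f ->
  IterInt (seq 0 k) (fun w => exp (- (beta * sumR k (fun j => w j * r j))) *
                              mu (fun x => f (vadd x (thetaT k theta w))))
    (resolvent_comp theta beta r (seq 0 k) mu f).
Proof.
  intros Hmu Hf. rewrite integrand_seq.
  apply (IterInt_resolvent_comp d); auto. apply seq_NoDup. apply rpos_seq.
Qed.

Lemma generator_comp_seq_spec nu : Subinvariant d k theta beta r nu ->
  IsMeasure d (generator_comp theta beta r (seq 0 k) nu) /\
  (forall f, Cper d f -> IterLim (seq 0 k) (fun s => / prodR k s * Pop k theta beta r s nu f)
                                 (generator_comp theta beta r (seq 0 k) nu f)) /\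
  mass (generator_comp theta beta r (seq 0 k) nu) = mass nu * prodR k (fun j => beta * r j).
Proof.
  intros Hnu. apply Subinvariant_iff_list in Hnu.
  destruct (generator_comp_spec d theta beta r Hbeta (seq 0 k) (seq_NoDup k 0) rpos_seq nu Hnu)
    as [H1 [H2 H3]].
  rewrite prodR_lprod. split; [|split]; auto. intros f Hf. rewrite Pop_quot_seq. auto.
Qed.

End SeqIndices.

Theorem mainTheorem12 (d k : nat) (theta : nat -> nat -> R) (beta : R) (r : nat -> R)
  (Htheta : forall j i, (j < k)%nat -> (i < d)%nat -> 0 <= theta j i)
  (Hbeta : 0 < beta)
  (Hr : forall j, (j < k)%nat -> 0 < r j) :
  (* (a) *)
  (forall mu, IsMeasure d mu -> exists nu,
     IsMeasure d nu /\
     (forall f, Cper d f ->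
        IterInt (seq 0 k)
          (fun w => exp (- (beta * sumR k (fun j => w j * r j))) *
                    mu (fun x => f (vadd x (thetaT k theta w))))
          (nu f)) /\
     mass nu = mass mu * prodR k (fun j => / (beta * r j)) /\
     Subinvariant d k theta beta r nu) /\
  (* (b) *)
  (forall nu, Subinvariant d k theta beta r nu -> exists mu,
     IsMeasure d mu /\
     (forall f, Cper d f ->
        IterLim (seq 0 k)
          (fun s => / prodR k s * Pop k theta beta r s nu f) (mu f)) /\
     mass mu = mass nu * prodR k (fun j => beta * r j)) /\
  (* (c) *)
  (exists Phi Psi : meas -> meas,
     (forall mu, IsMeasure d mu ->
        forall f, Cper d f ->
          IterInt (seq 0 k)
            (fun w => exp (- (beta * sumR k (fun j => w j * r j))) *
                      mu (fun x => f (vadd x (thetaT k theta w))))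
            (Phi mu f)) /\
     (forall nu, Subinvariant d k theta beta r nu ->
        forall f, Cper d f ->
          IterLim (seq 0 k)
            (fun s => / prodR k s * Pop k theta beta r s nu f) (Psi nu f)) /\
     (forall mu, IsMeasure d mu -> Subinvariant d k theta beta r (Phi mu)) /\
     (forall nu, Subinvariant d k theta beta r nu -> IsMeasure d (Psi nu)) /\
     (forall mu, IsMeasure d mu -> MeasEq d (Psi (Phi mu)) mu) /\
     (forall nu, Subinvariant d k theta beta r nu -> MeasEq d (Phi (Psi nu)) nu) /\
     (forall mu1 mu2 t, IsMeasure d mu1 -> IsMeasure d mu2 -> 0 <= t <= 1 ->
        MeasEq d (Phi (fun f => t * mu1 f + (1 - t) * mu2 f))
                 (fun f => t * Phi mu1 f + (1 - t) * Phi mu2 f)) /\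
     WeakStarCont d (IsMeasure d) Phi /\
     WeakStarCont d (Subinvariant d k theta beta r) Psi).
Proof.
  assert (Hrl := rpos_seq k r Hr).
  set (Phi := resolvent_comp theta beta r (seq 0 k)).
  set (Psi := generator_comp theta beta r (seq 0 k)).
  assert (HSub : forall mu, IsMeasure d mu -> Subinvariant d k theta beta r (Phi mu)).
  { intros mu Hmu. apply Subinvariant_iff_list, (Subinvariant_list_resolvent_comp d); auto. }
  split; [|split].
  - intros mu Hmu. exists (Phi mu). split; [|split; [|split]]; auto.
    + apply (resolvent_comp_IsMeasure d); auto.
    + intros f Hf. apply (IterInt_resolvent_comp_seq d); auto.
    + rewrite prodR_lprod. apply (resolvent_comp_mass d); auto.
  - intros nu Hnu. exists (Psi nu). apply (generator_comp_seq_spec d); auto.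
  - exists Phi, Psi. split; [|split; [|split; [|split; [|split; [|split; [|split; [|split]]]]]]]; auto.
    + intros mu Hmu f Hf. apply (IterInt_resolvent_comp_seq d); auto.
    + intros nu Hnu. apply (generator_comp_seq_spec d); auto.
    + intros nu Hnu. apply (generator_comp_seq_spec d); auto.
    + intros mu Hmu. apply (generator_comp_resolvent_comp d); auto. apply seq_NoDup.
    + intros nu Hnu. apply (resolvent_comp_generator_comp d); auto. apply seq_NoDup.
      now apply Subinvariant_iff_list.
    + intros mu1 mu2 t H1 H2 Ht. apply (resolvent_comp_lin d); auto.
    + apply (WeakStarCont_resolvent_comp d); auto.
    + apply (WeakStarCont_sub d (Subinvariant_list d theta beta r (seq 0 k))).
      * intros m Hm; now apply Subinvariant_iff_list.
      * apply (WeakStarCont_generator_comp d); auto. apply seq_NoDup.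
Qed.
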